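(* Let $\mathbf{v}(\mathbf{x},t)$ be a smooth velocity field on a domain in $\mathbb{R}^3$, let $\mathbf{x}(t)$, $t\in[t_0,t_1]$, be a trajectory ($\dot{\mathbf{x}}=\mathbf{v}(\mathbf{x},t)$), and for $\tau,t\in[t_0,t_1]$ let $\mathbf{F}_\tau^t$ be the deformation gradient along it, i.e. the solution of $\dot{\mathbf{F}}_\tau^t=\nabla\mathbf{v}(\mathbf{x}(t),t)\mathbf{F}_\tau^t$, $\mathbf{F}_\tau^\tau=\mathbf{I}$. Then: (i) $\mathbf{F}_\tau^t$ admits a unique decomposition $\mathbf{F}_\tau^t=\mathbf{O}_\tau^t\mathbf{M}_\tau^t=\mathbf{N}_\tau^t\mathbf{O}_\tau^t$ in which $\mathbf{O}_\tau^t$ is a rotational linear process, $\mathbf{M}_\tau^t$ is an irrotational family, and $(\mathbf{N}_\tau^t)^T$ is irrotational as a function of $\tau$ (i.e. $[\frac{d}{d\tau}(\mathbf{N}_\tau^t)^T][(\mathbf{N}_\tau^t)^T]^{-1}$ is symmetric). (ii) $\mathbf{M}_\tau^t$ and $\mathbf{N}_\tau^t=(\mathbf{M}_t^\tau)^{-1}$ are nonsingular, have the same singular values as $\mathbf{F}_\tau^t$, and satisfy $(\mathbf{M}_\tau^t)^T\mathbf{M}_\tau^t=(\mathbf{F}_\tau^t)^T\mathbf{F}_\tau^t$ and $\mathbf{N}_\tau^t(\mathbf{N}_\tau^t)^T=\mathbf{F}_\tau^t(\mathbf{F}_\tau^t)^T$ (so they share the principal strain values and axes of the polar stretch tensors).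 (iii) The factors are the unique solutions of $$\dot{\mathbf{O}}_\tau^t=\mathbf{W}(\mathbf{x}(t),t)\mathbf{O}_\tau^t,\ \mathbf{O}_\tau^\tau=\mathbf{I};\qquad \dot{\mathbf{M}}_\tau^t=\big[\mathbf{O}_t^\tau\mathbf{D}(\mathbf{x}(t),t)\mathbf{O}_\tau^t\big]\mathbf{M}_\tau^t,\ \mathbf{M}_\tau^\tau=\mathbf{I};$$ $$\frac{d}{d\tau}(\mathbf{N}_\tau^t)^T=-\big[\mathbf{O}_\tau^t\mathbf{D}(\mathbf{x}(\tau),\tau)\mathbf{O}_t^\tau\big](\mathbf{N}_\tau^t)^T,\ (\mathbf{N}_t^t)^T=\mathbf{I}.$$
   Context: $\mathbf{W}=\frac12[\nabla\mathbf{v}-(\nabla\mathbf{v})^T]$ (spin tensor) and $\mathbf{D}=\frac12[\nabla\mathbf{v}+(\nabla\mathbf{v})^T]$ (rate-of-strain tensor). A linear process is a $C^1$ two-parameter family $\mathbf{T}_\tau^t$ of linear maps with $\mathbf{T}_t^t=\mathbf{I}$ and $\mathbf{T}_\tau^t=\mathbf{T}_s^t\mathbf{T}_\tau^s$ for all $\tau,s,t$. A smooth two-parameter family $\mathbf{T}_\tau^t$ is rotational if $\dot{\mathbf{T}}_\tau^t(\mathbf{T}_\tau^t)^{-1}$ is skew-symmetric for all $\tau,t$ (equivalently $\mathbf{T}_\tau^t\in SO(3)$), and irrotational if $\dot{\mathbf{T}}_\tau^t(\mathbf{T}_\tau^t)^{-1}$ is symmetric for all $\tau,t$; the dot denotes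 $\partial/\partial t$. Also $\mathbf{O}_t^\tau=(\mathbf{O}_\tau^t)^{-1}=(\mathbf{O}_\tau^t)^T$. *)

From Stdlib Require Import Reals.
Open Scope R_scope.

Inductive I3 : Type := i0 | i1 | i2.

Definition I3_eqb (a b : I3) : bool :=
  match a, b with
  | i0, i0 | i1, i1 | i2, i2 => true
  | _, _ => false
  end.

Definition Vec := I3 -> R.
Definition Mat := I3 -> I3 -> R.

Definition vshift (y : Vec) (j : I3) (h : R) : Vec :=
  fun k => if I3_eqb k j then y k + h else y k.

Definition mI : Mat := fun i j => if I3_eqb i j then 1 else 0.
Definition mmul (A B : Mat) : Mat :=
  fun i j => A i i0 * B i0 j + A i i1 * B i1 j + A i i2 * B i2 j.
Definition mtr (A : Mat) : Mat := fun i j => A j i.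
Definition madd (A B : Mat) : Mat := fun i j => A i j + B i j.
Definition mopp (A : Mat) : Mat := fun i j => - A i j.
Definition mscal (c : R) (A : Mat) : Mat := fun i j => c * A i j.

Definition mdet (A : Mat) : R :=
    A i0 i0 * (A i1 i1 * A i2 i2 - A i1 i2 * A i2 i1)
  - A i0 i1 * (A i1 i0 * A i2 i2 - A i1 i2 * A i2 i0)
  + A i0 i2 * (A i1 i0 * A i2 i1 - A i1 i1 * A i2 i0).

Definition is_inverse (A B : Mat) : Prop := mmul A B = mI /\ mmul B A = mI.
Definition nonsingular (A : Mat) : Prop := exists B, is_inverse A B.

Definition skew (A : Mat) : Prop := mtr A = mopp A.
Definition symm (A : Mat) : Prop := mtr A = A.

Definition spin (L : Mat) : Mat := mscal (1/2) (madd L (mopp (mtr L))).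
Definition strain_rate (L : Mat) : Mat := mscal (1/2) (madd L (mtr L)).

(* Singular values of A = nonnegative square roots of the eigenvalues (with
   multiplicity) of A^T A; two matrices have the same singular values iff
   A^T A and B^T B have the same characteristic polynomial. *)
Definition same_singular_values (A B : Mat) : Prop :=
  forall lam : R,
    mdet (madd (mscal lam mI) (mopp (mmul (mtr A) A)))
    = mdet (madd (mscal lam mI) (mopp (mmul (mtr B) B))).

Definition open_vec (U : Vec -> Prop) : Prop :=
  forall y, U y -> exists r, 0 < r /\
    forall z, (forall k, Rabs (z k - y k) < r) -> U z.

Definition cont_at (U : Vec -> Prop) (f : Vec -> R -> R) (y : Vec) (s : R) : Prop :=
  forall eps, 0 < eps -> exists del, 0 < del /\
    forall z s', U z -> (forall k, Rabs (z k - y k) < del) -> Rabs (s' - s) < del ->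
      Rabs (f z s' - f y s) < eps.

(* partial derivative: Some j = d/dx_j, None = d/dt *)
Definition partial_at (k : option I3) (f g : Vec -> R -> R) (y : Vec) (s : R) : Prop :=
  match k with
  | Some j => derivable_pt_lim (fun h => f (vshift y j h) s) 0 (g y s)
  | None => derivable_pt_lim (fun s' => f y s') s (g y s)
  end.

(* C^infinity on U x R: continuous, and every first partial exists and is again
   C^infinity (coinductively). *)
CoInductive smooth_on (U : Vec -> Prop) (f : Vec -> R -> R) : Prop :=
  smooth_intro :
    (forall y s, U y -> cont_at U f y s) ->
    (forall k : option I3, exists g : Vec -> R -> R,
        (forall y s, U y -> partial_at k f g y s) /\ smooth_on U g) ->
    smooth_on U f.

Definition inI (t0 t1 s : R) : Prop := t0 <= s <= t1.

(* derivative within [t0,t1] (one-sided at the endpoints) *)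
Definition deriv_in (t0 t1 : R) (f : R -> R) (t l : R) : Prop :=
  limit1_in (fun s => (f s - f t) / (s - t)) (fun s => inI t0 t1 s /\ s <> t) l t.

(* A two-parameter family T tau t = T_tau^t *)
Definition Fam := R -> R -> Mat.

Definition dt_is (t0 t1 : R) (T : Fam) (tau t : R) (A : Mat) : Prop :=
  forall i j, deriv_in t0 t1 (fun s => T tau s i j) t (A i j).
Definition dtau_is (t0 t1 : R) (T : Fam) (tau t : R) (A : Mat) : Prop :=
  forall i j, deriv_in t0 t1 (fun s => T s t i j) tau (A i j).

Definition cont2 (t0 t1 : R) (g : R -> R -> R) : Prop :=
  forall a b, inI t0 t1 a -> inI t0 t1 b ->
  forall eps, 0 < eps -> exists del, 0 < del /\
    forall a' b', inI t0 t1 a' -> inI t0 t1 b' ->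
      Rabs (a' - a) < del -> Rabs (b' - b) < del -> Rabs (g a' b' - g a b) < eps.

Definition C1_family (t0 t1 : R) (T : Fam) : Prop :=
  exists Dt Dtau : Fam,
    (forall tau t, inI t0 t1 tau -> inI t0 t1 t ->
        dt_is t0 t1 T tau t (Dt tau t) /\ dtau_is t0 t1 T tau t (Dtau tau t)) /\
    (forall i j, cont2 t0 t1 (fun a b => T a b i j) /\
                 cont2 t0 t1 (fun a b => Dt a b i j) /\
                 cont2 t0 t1 (fun a b => Dtau a b i j)).

Definition linear_process (t0 t1 : R) (T : Fam) : Prop :=
  C1_family t0 t1 T /\
  (forall s, inI t0 t1 s -> T s s = mI) /\
  (forall tau s t, inI t0 t1 tau -> inI t0 t1 s -> inI t0 t1 t ->
     T tau t = mmul (T s t) (T tau s)).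

Definition rotational (t0 t1 : R) (T : Fam) : Prop :=
  C1_family t0 t1 T /\
  forall tau t, inI t0 t1 tau -> inI t0 t1 t ->
    exists A Ti, dt_is t0 t1 T tau t A /\ is_inverse (T tau t) Ti /\ skew (mmul A Ti).

Definition irrotational (t0 t1 : R) (T : Fam) : Prop :=
  C1_family t0 t1 T /\
  forall tau t, inI t0 t1 tau -> inI t0 t1 t ->
    exists A Ti, dt_is t0 t1 T tau t A /\ is_inverse (T tau t) Ti /\ symm (mmul A Ti).

Definition irrotational_tau (t0 t1 : R) (T : Fam) : Prop :=
  C1_family t0 t1 T /\
  forall tau t, inI t0 t1 tau -> inI t0 t1 t ->
    exists A Ti, dtau_is t0 t1 T tau t A /\ is_inverse (T tau t) Ti /\ symm (mmul A Ti).

Definition famT (N : Fam) : Fam := fun tau t => mtr (N tau t).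

Definition fam_eq (t0 t1 : R) (T S : Fam) : Prop :=
  forall tau t, inI t0 t1 tau -> inI t0 t1 t -> T tau t = S tau t.

(* the three ODE characterisations of part (iii), with L t = grad v (x(t),t) *)
Definition O_ode (t0 t1 : R) (L : R -> Mat) (O : Fam) : Prop :=
  (forall tau, inI t0 t1 tau -> O tau tau = mI) /\
  (forall tau t, inI t0 t1 tau -> inI t0 t1 t ->
     dt_is t0 t1 O tau t (mmul (spin (L t)) (O tau t))).

Definition M_ode (t0 t1 : R) (L : R -> Mat) (O M : Fam) : Prop :=
  (forall tau, inI t0 t1 tau -> M tau tau = mI) /\
  (forall tau t, inI t0 t1 tau -> inI t0 t1 t ->
     dt_is t0 t1 M tau t
       (mmul (mmul (mmul (O t tau) (strain_rate (L t))) (O tau t)) (M tau t))).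

Definition N_ode (t0 t1 : R) (L : R -> Mat) (O N : Fam) : Prop :=
  (forall t, inI t0 t1 t -> mtr (N t t) = mI) /\
  (forall tau t, inI t0 t1 tau -> inI t0 t1 t ->
     dtau_is t0 t1 (famT N) tau t
       (mopp (mmul (mmul (mmul (O tau t) (strain_rate (L tau))) (O t tau))
                   (mtr (N tau t))))).

Definition decomp (t0 t1 : R) (F O M N : Fam) : Prop :=
  linear_process t0 t1 O /\ rotational t0 t1 O /\
  irrotational t0 t1 M /\ irrotational_tau t0 t1 (famT N) /\
  (forall tau t, inI t0 t1 tau -> inI t0 t1 t ->
     F tau t = mmul (O tau t) (M tau t) /\ F tau t = mmul (N tau t) (O tau t)).

From Stdlib Require Import Reals Lra Psatz FunctionalExtensionality ClassicalEpsilon.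
From Coquelicot Require Import Coquelicot.
Open Scope R_scope.

(* Everything is built from three fundamental matrices on [t0,t1], obtained by Picard
   iteration: [Phi' = W Phi], [Psi' = L Psi] and [Y' = -L^T Y], all equal to [I] at [t0].
   The products [Phi^T Phi] and [Y^T Psi] have zero derivative, so [Phi] is orthogonal and
   [Y^T = Psi^-1]; hence [F_tau^t = Psi(t) Y(tau)^T], and we set [O_tau^t = Phi(t) Phi(tau)^T],
   [M = O_t^tau F], [N = F O_t^tau].  The product rule together with [L = W + D] gives the
   three evolution equations, and every uniqueness claim reduces to uniqueness for a linear
   equation [X' = K X] with bounded [K], proved by a Gronwall estimate on [|X|^2].  For the
   uniqueness of the decomposition, differentiating [F = O M] writes [L] as the skew matrix
   [dO O^-1] plus a symmetric one, which forces [dO O^-1 = W]. *)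

(** * Matrix algebra *)

Lemma mat_ext (A B : Mat) : (forall i j, A i j = B i j) -> A = B.
Proof. intros H; extensionality i; extensionality j; apply H. Qed.

Definition mzero : Mat := fun _ _ => 0.

Ltac mat_field := apply mat_ext; intros ?i ?j;
  unfold spin, strain_rate, mmul, madd, mopp, mtr, mscal, mzero; cbv beta; field.

Lemma mmul_assoc A B C : mmul (mmul A B) C = mmul A (mmul B C).
Proof. mat_field. Qed.
Lemma mmul_I_l A : mmul mI A = A.
Proof. apply mat_ext; intros [] []; unfold mmul, mI; simpl; ring. Qed.
Lemma mmul_I_r A : mmul A mI = A.
Proof. apply mat_ext; intros [] []; unfold mmul, mI; simpl; ring. Qed.
Lemma mtr_mmul A B : mtr (mmul A B) = mmul (mtr B) (mtr A).
Proof. mat_field. Qed.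
Lemma mtr_I : mtr mI = mI.
Proof. apply mat_ext; intros [] []; reflexivity. Qed.
Lemma mtr_opp A : mtr (mopp A) = mopp (mtr A).
Proof. reflexivity. Qed.
Lemma mmul_add_l A B C : mmul (madd A B) C = madd (mmul A C) (mmul B C).
Proof. mat_field. Qed.
Lemma mmul_add_r A B C : mmul A (madd B C) = madd (mmul A B) (mmul A C).
Proof. mat_field. Qed.
Lemma mmul_opp_l A B : mmul (mopp A) B = mopp (mmul A B).
Proof. mat_field. Qed.
Lemma mmul_opp_r A B : mmul A (mopp B) = mopp (mmul A B).
Proof. mat_field. Qed.
Lemma mmul_scal_l c A B : mmul (mscal c A) B = mscal c (mmul A B).
Proof. mat_field. Qed.
Lemma mmul_scal_r c A B : mmul A (mscal c B) = mscal c (mmul A B).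
Proof. mat_field. Qed.

Lemma mmul_0_l A : mmul mzero A = mzero.
Proof. apply mat_ext; intros i j; unfold mmul, mzero; ring. Qed.
Lemma madd_0_r A : madd A mzero = A.
Proof. apply mat_ext; intros i j; unfold madd, mzero; ring. Qed.
Lemma madd_opp_r A : madd A (mopp A) = mzero.
Proof. apply mat_ext; intros i j; unfold madd, mopp, mzero; ring. Qed.
Lemma madd_opp_eq_0 A B : madd A (mopp B) = mzero -> A = B.
Proof.
  intros H. apply mat_ext; intros i j. apply (f_equal (fun X => X i j)) in H.
  unfold madd, mopp, mzero in H. lra.
Qed.

Lemma spin_skew A : skew (spin A).
Proof. unfold skew; mat_field. Qed.
Lemma strain_symm A : symm (strain_rate A).
Proof. unfold symm; mat_field. Qed.
Lemma spin_add A B : spin (madd A B) = madd (spin A) (spin B).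
Proof. mat_field. Qed.
Lemma spin_of_skew A : skew A -> spin A = A.
Proof.
  intros H. apply mat_ext; intros i j. apply (f_equal (fun X => X i j)) in H.
  unfold spin, madd, mopp, mtr, mscal in *. lra.
Qed.
Lemma spin_of_symm A : symm A -> spin A = mzero.
Proof.
  intros H. apply mat_ext; intros i j. apply (f_equal (fun X => X i j)) in H.
  unfold spin, madd, mopp, mtr, mscal, mzero in *. lra.
Qed.

Lemma mdet_mmul A B : mdet (mmul A B) = mdet A * mdet B.
Proof. unfold mdet, mmul; ring. Qed.
Lemma mdet_I : mdet mI = 1.
Proof. unfold mdet, mI; simpl; ring. Qed.

Definition madj (A : Mat) : Mat := fun i j =>
  match j, i with
  | i0, i0 => A i1 i1 * A i2 i2 - A i1 i2 * A i2 i1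
  | i0, i1 => - (A i1 i0 * A i2 i2 - A i1 i2 * A i2 i0)
  | i0, i2 => A i1 i0 * A i2 i1 - A i1 i1 * A i2 i0
  | i1, i0 => - (A i0 i1 * A i2 i2 - A i0 i2 * A i2 i1)
  | i1, i1 => A i0 i0 * A i2 i2 - A i0 i2 * A i2 i0
  | i1, i2 => - (A i0 i0 * A i2 i1 - A i0 i1 * A i2 i0)
  | i2, i0 => A i0 i1 * A i1 i2 - A i0 i2 * A i1 i1
  | i2, i1 => - (A i0 i0 * A i1 i2 - A i0 i2 * A i1 i0)
  | i2, i2 => A i0 i0 * A i1 i1 - A i0 i1 * A i1 i0
  end.

Lemma mmul_madj_r A : mmul A (madj A) = mscal (mdet A) mI.
Proof. apply mat_ext; intros [] []; unfold mmul, madj, mscal, mI, mdet; simpl; ring. Qed.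

Lemma mmul_inv_cancel A B X : mmul A B = mI -> mmul A (mmul B X) = X.
Proof. intros H. rewrite <- mmul_assoc, H, mmul_I_l. reflexivity. Qed.

(* [A B = I] forces [A = adj B / det B]. *)
Lemma mmul_eq_I_comm A B : mmul A B = mI -> mmul B A = mI.
Proof.
  intros H.
  assert (Hd : mdet A * mdet B = 1) by (rewrite <- mdet_mmul, H; apply mdet_I).
  assert (HB : mdet B <> 0) by (intro E; rewrite E in Hd; lra).
  assert (HA : A = mscal (/ mdet B) (madj B)).
  { transitivity (mscal (/ mdet B) (mmul A (mmul B (madj B)))).
    - rewrite mmul_madj_r. apply mat_ext; intros [] []; unfold mscal, mmul, mI; simpl; field; auto.
    - rewrite <- mmul_assoc, H, mmul_I_l; reflexivity. }
  rewrite HA, mmul_scal_r, mmul_madj_r. apply mat_ext; intros i j; unfold mscal; field; auto.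
Qed.

Lemma is_inverse_sym A B : is_inverse A B -> is_inverse B A.
Proof. intros [H1 H2]; split; auto. Qed.

Lemma is_inverse_of_mmul_eq_I A B : mmul A B = mI -> is_inverse A B.
Proof. intros H; split; [exact H | apply mmul_eq_I_comm, H]. Qed.

Lemma mdet_charpoly_conj P Q X lam : mmul P Q = mI ->
  mdet (madd (mscal lam mI) (mopp (mmul (mmul P X) Q))) = mdet (madd (mscal lam mI) (mopp X)).
Proof.
  intros H.
  assert (E : madd (mscal lam mI) (mopp (mmul (mmul P X) Q)) =
              mmul (mmul P (madd (mscal lam mI) (mopp X))) Q).
  { rewrite mmul_add_r, mmul_add_l, mmul_scal_r, mmul_I_r, mmul_scal_l, H.
    rewrite mmul_opp_r, mmul_opp_l. reflexivity. }
  assert (HPQ : mdet P * mdet Q = 1) by (rewrite <- mdet_mmul, H; apply mdet_I).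
  rewrite E, !mdet_mmul.
  transitivity (mdet (madd (mscal lam mI) (mopp X)) * (mdet P * mdet Q)); [ring|].
  rewrite HPQ; ring.
Qed.

Lemma mmul_entry_bound K P i j C B : (forall l, Rabs (K i l) <= C) -> (forall l, Rabs (P l j) <= B) ->
  Rabs (mmul K P i j) <= 3 * C * B.
Proof.
  intros HK HP. unfold mmul.
  assert (Hl : forall l, Rabs (K i l * P l j) <= C * B).
  { intros l. rewrite Rabs_mult. apply Rmult_le_compat; try apply Rabs_pos; auto. }
  pose proof (Hl i0); pose proof (Hl i1); pose proof (Hl i2).
  eapply Rle_trans; [apply Rabs_triang|].
  eapply Rle_trans; [apply Rplus_le_compat_r; apply Rabs_triang|]. lra.
Qed.

Lemma orthogonal_entry_bound Q : mmul (mtr Q) Q = mI -> forall i j, Rabs (Q i j) <= 1.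
Proof.
  intros H i j. apply (f_equal (fun A => A j j)) in H. unfold mmul, mtr, mI in H.
  assert (E : I3_eqb j j = true) by (destruct j; reflexivity). rewrite E in H.
  assert (Q i j * Q i j <= 1) by (destruct i; pose proof (Rle_0_sqr (Q i0 j));
    pose proof (Rle_0_sqr (Q i1 j)); pose proof (Rle_0_sqr (Q i2 j)); unfold Rsqr in *; lra).
  unfold Rabs; destruct Rcase_abs; nra.
Qed.

Lemma strain_rate_entry_bound A C : (forall i j, Rabs (A i j) <= C) ->
  forall i j, Rabs (strain_rate A i j) <= C.
Proof.
  intros H i j. unfold strain_rate, mscal, madd, mtr.
  pose proof (H i j); pose proof (H j i). rewrite Rabs_mult, (Rabs_right (1/2)) by lra.
  pose proof (Rabs_triang (A i j) (A j i)). lra.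
Qed.
Lemma spin_entry_bound A C : (forall i j, Rabs (A i j) <= C) ->
  forall i j, Rabs (spin A i j) <= C.
Proof.
  intros H i j. unfold spin, mscal, madd, mtr, mopp.
  pose proof (H i j); pose proof (H j i). rewrite Rabs_mult, (Rabs_right (1/2)) by lra.
  pose proof (Rabs_triang (A i j) (- A j i)). rewrite Rabs_Ropp in *. lra.
Qed.
Lemma opp_mtr_entry_bound A C : (forall i j, Rabs (A i j) <= C) ->
  forall i j, Rabs (mopp (mtr A) i j) <= C.
Proof. intros H i j. unfold mopp, mtr. rewrite Rabs_Ropp. auto. Qed.

(** * Calculus on the interval [t0,t1] *)

Definition punctured (t0 t1 t : R) := fun s => inI t0 t1 s /\ s <> t.

Lemma limit1_in_ext f g D l x0 : (forall x, D x -> f x = g x) ->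
  limit1_in f D l x0 -> limit1_in g D l x0.
Proof.
  intros He H eps Heps; destruct (H eps Heps) as [a [Ha Hb]].
  exists a; split; auto. intros x [Dx Hx]; rewrite <- He by auto; apply Hb; auto.
Qed.

Lemma limit1_in_const c D x0 : limit1_in (fun _ => c) D c x0.
Proof. apply (limit_free (fun _ => c) D 0 x0). Qed.

Definition cont_in (t0 t1 : R) (f : R -> R) (t : R) : Prop :=
  forall eps, 0 < eps -> exists del, 0 < del /\
    forall s, inI t0 t1 s -> Rabs (s - t) < del -> Rabs (f s - f t) < eps.

Section IntervalDerivative.
Variables t0 t1 : R.

Lemma deriv_in_limit f t l : deriv_in t0 t1 f t l -> limit1_in f (punctured t0 t1 t) (f t) t.
Proof.
  intros H.
  assert (H1 : limit1_in (fun s => (f s - f t) / (s - t) * (s - t) + f t)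
                 (punctured t0 t1 t) (l * (t - t) + f t) t).
  { apply limit_plus; [apply limit_mul|apply limit1_in_const]; auto.
    apply limit_minus; [apply lim_x|apply limit1_in_const]. }
  replace (l * (t - t) + f t) with (f t) in H1 by ring.
  revert H1; apply limit1_in_ext. intros x [_ Hx]. field. intro E; apply Hx; lra.
Qed.

Lemma deriv_in_cont f t l : deriv_in t0 t1 f t l -> cont_in t0 t1 f t.
Proof.
  intros H eps Heps. destruct (deriv_in_limit _ _ _ H eps Heps) as [a [Ha Hb]].
  exists a; split; [lra|]. intros s Hs Hst.
  destruct (Req_dec s t) as [->|Hne].
  - rewrite Rminus_diag, Rabs_R0; lra.
  - apply (Hb s). split; [split; auto|]. exact Hst.
Qed.

Lemma deriv_in_plus f g t lf lg : deriv_in t0 t1 f t lf -> deriv_in t0 t1 g t lg ->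
  deriv_in t0 t1 (fun s => f s + g s) t (lf + lg).
Proof.
  intros Hf Hg. eapply limit1_in_ext; [|apply limit_plus; [exact Hf|exact Hg]].
  intros x [_ Hx]; simpl. field. intro E; apply Hx; lra.
Qed.

Lemma deriv_in_opp f t lf : deriv_in t0 t1 f t lf -> deriv_in t0 t1 (fun s => - f s) t (- lf).
Proof.
  intros Hf. eapply limit1_in_ext; [|apply limit_Ropp; exact Hf].
  intros x [_ Hx]; simpl. field. intro E; apply Hx; lra.
Qed.

Lemma deriv_in_const c t : deriv_in t0 t1 (fun _ => c) t 0.
Proof.
  eapply limit1_in_ext; [|apply limit1_in_const].
  intros x [_ Hx]; simpl. field. intro E; apply Hx; lra.
Qed.

Lemma deriv_in_mult f g t lf lg : deriv_in t0 t1 f t lf -> deriv_in t0 t1 g t lg ->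
  deriv_in t0 t1 (fun s => f s * g s) t (lf * g t + f t * lg).
Proof.
  intros Hf Hg. pose proof (deriv_in_limit _ _ _ Hg) as Hgc.
  eapply limit1_in_ext; [|apply limit_plus; [apply limit_mul; [exact Hf|exact Hgc]
                                      |apply limit_mul; [apply limit1_in_const|exact Hg]]].
  intros x [_ Hx]; simpl. field. intro E; apply Hx; lra.
Qed.

Lemma deriv_in_ext f g t l : (forall s, inI t0 t1 s -> f s = g s) -> inI t0 t1 t ->
  deriv_in t0 t1 f t l -> deriv_in t0 t1 g t l.
Proof.
  intros He Ht H. eapply limit1_in_ext; [|exact H].
  intros x [Hx _]; simpl. rewrite !He; auto.
Qed.

Lemma deriv_in_eq f t l l' : l = l' -> deriv_in t0 t1 f t l -> deriv_in t0 t1 f t l'.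
Proof. intros ->; auto. Qed.

Lemma deriv_in_of_derivable_pt_lim f t l : derivable_pt_lim f t l -> deriv_in t0 t1 f t l.
Proof.
  intros H eps Heps. destruct (H eps Heps) as [d Hd].
  exists d; split; [apply cond_pos|]. intros x [[_ Hx] Hxd]. simpl in *.
  unfold Rdist in *.
  specialize (Hd (x - t)). replace (t + (x - t)) with x in Hd by ring.
  apply Hd; auto. intro E; apply Hx; lra.
Qed.

Lemma deriv_in_unique f t l l' : t0 < t1 -> inI t0 t1 t ->
  deriv_in t0 t1 f t l -> deriv_in t0 t1 f t l' -> l = l'.
Proof.
  intros Hlt Ht H1 H2. eapply single_limit; [|exact H1|exact H2].
  intros alp Halp. unfold inI in Ht.
  set (e := Rmin (alp/2) ((t1 - t0)/2)).
  assert (0 < e) by (apply Rmin_glb_lt; lra).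
  assert (e <= alp/2) by apply Rmin_l.
  assert (e <= (t1-t0)/2) by apply Rmin_r.
  destruct (Rle_dec t ((t0 + t1)/2)).
  - exists (t + e). unfold inI, Rdist.
    repeat split; try lra. rewrite Rabs_right; lra.
  - exists (t - e). unfold inI, Rdist.
    repeat split; try lra. rewrite Rabs_left; lra.
Qed.

Definition mderiv_in (A : R -> Mat) (t : R) (A' : Mat) : Prop :=
  forall i j, deriv_in t0 t1 (fun s => A s i j) t (A' i j).

Lemma mderiv_in_mmul A B t A' B' : mderiv_in A t A' -> mderiv_in B t B' ->
  mderiv_in (fun s => mmul (A s) (B s)) t (madd (mmul A' (B t)) (mmul (A t) B')).
Proof.
  intros HA HB i j. unfold mmul, madd.
  pose proof (fun k => deriv_in_mult _ _ _ _ _ (HA i k) (HB k j)) as Hk.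
  pose proof (deriv_in_plus _ _ _ _ _ (deriv_in_plus _ _ _ _ _ (Hk i0) (Hk i1)) (Hk i2)) as H.
  eapply deriv_in_eq; [|exact H]. simpl; ring.
Qed.

Lemma mderiv_in_add A B t A' B' : mderiv_in A t A' -> mderiv_in B t B' ->
  mderiv_in (fun s => madd (A s) (B s)) t (madd A' B').
Proof. intros HA HB i j. apply deriv_in_plus; auto. Qed.

Lemma mderiv_in_opp A t A' : mderiv_in A t A' -> mderiv_in (fun s => mopp (A s)) t (mopp A').
Proof. intros HA i j. apply deriv_in_opp; auto. Qed.

Lemma mderiv_in_mtr A t A' : mderiv_in A t A' -> mderiv_in (fun s => mtr (A s)) t (mtr A').
Proof. intros HA i j. apply HA. Qed.

Lemma mderiv_in_const C t : mderiv_in (fun _ => C) t mzero.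
Proof. intros i j. apply deriv_in_const. Qed.

Lemma mderiv_in_eq A t A' A'' : A' = A'' -> mderiv_in A t A' -> mderiv_in A t A''.
Proof. intros ->; auto. Qed.

Lemma mderiv_in_ext A B t A' : (forall s, inI t0 t1 s -> A s = B s) -> inI t0 t1 t ->
  mderiv_in A t A' -> mderiv_in B t A'.
Proof.
  intros He Ht H i j. eapply deriv_in_ext; [|exact Ht|apply H].
  intros s Hs; simpl; rewrite (He s Hs); auto.
Qed.

Lemma mderiv_in_unique A t A' A'' : t0 < t1 -> inI t0 t1 t ->
  mderiv_in A t A' -> mderiv_in A t A'' -> A' = A''.
Proof. intros Hl Ht H1 H2. apply mat_ext; intros i j. eapply deriv_in_unique; eauto. Qed.

End IntervalDerivative.

Section JointContinuity.
Variables t0 t1 : R.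

Lemma cont2_const c : cont2 t0 t1 (fun _ _ => c).
Proof.
  intros a b Ha Hb eps He; exists 1; split; [lra|]; intros.
  rewrite Rminus_diag, Rabs_R0; lra.
Qed.

Lemma cont2_plus f g : cont2 t0 t1 f -> cont2 t0 t1 g -> cont2 t0 t1 (fun a b => f a b + g a b).
Proof.
  intros Hf Hg a b Ha Hb eps He.
  destruct (Hf a b Ha Hb (eps/2)) as [d1 [Hd1 H1]]; [lra|].
  destruct (Hg a b Ha Hb (eps/2)) as [d2 [Hd2 H2]]; [lra|].
  exists (Rmin d1 d2); split; [apply Rmin_glb_lt; auto|].
  intros a' b' Ha' Hb' Hda Hdb.
  assert (Rmin d1 d2 <= d1) by apply Rmin_l. assert (Rmin d1 d2 <= d2) by apply Rmin_r.
  replace (f a' b' + g a' b' - (f a b + g a b)) with ((f a' b' - f a b) + (g a' b' - g a b)) by ring.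
  eapply Rle_lt_trans; [apply Rabs_triang|].
  assert (Rabs (f a' b' - f a b) < eps/2) by (apply H1; auto; lra).
  assert (Rabs (g a' b' - g a b) < eps/2) by (apply H2; auto; lra). lra.
Qed.

Lemma cont2_opp f : cont2 t0 t1 f -> cont2 t0 t1 (fun a b => - f a b).
Proof.
  intros Hf a b Ha Hb eps He. destruct (Hf a b Ha Hb eps He) as [d [Hd H]].
  exists d; split; auto; intros.
  replace (- f a' b' - - f a b) with (- (f a' b' - f a b)) by ring.
  rewrite Rabs_Ropp; auto.
Qed.

Lemma Rabs_mult_sub_le x y x' y' e : 0 < e -> e <= 1 ->
  Rabs (x' - x) < e -> Rabs (y' - y) < e ->
  Rabs (x' * y' - x * y) <= e * (1 + Rabs x + Rabs y).
Proof.
  intros He He1 Hx Hy.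
  replace (x' * y' - x * y) with ((x' - x) * (y' - y) + x * (y' - y) + y * (x' - x)) by ring.
  eapply Rle_trans; [apply Rabs_triang|].
  eapply Rle_trans; [apply Rplus_le_compat_r; apply Rabs_triang|].
  rewrite !Rabs_mult.
  pose proof (Rabs_pos (x'-x)). pose proof (Rabs_pos (y'-y)).
  pose proof (Rabs_pos x). pose proof (Rabs_pos y).
  assert (Rabs (x'-x) * Rabs (y'-y) <= e * 1) by (apply Rmult_le_compat; lra).
  assert (Rabs x * Rabs (y'-y) <= Rabs x * e) by (apply Rmult_le_compat_l; lra).
  assert (Rabs y * Rabs (x'-x) <= Rabs y * e) by (apply Rmult_le_compat_l; lra).
  nra.
Qed.

Lemma cont2_mult f g : cont2 t0 t1 f -> cont2 t0 t1 g -> cont2 t0 t1 (fun a b => f a b * g a b).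
Proof.
  intros Hf Hg a b Ha Hb eps He.
  set (K := 1 + Rabs (f a b) + Rabs (g a b)).
  assert (HK : 1 <= K) by (unfold K; pose proof (Rabs_pos (f a b)); pose proof (Rabs_pos (g a b)); lra).
  set (e := Rmin 1 (eps / (2 * K))).
  assert (He0 : 0 < e) by (apply Rmin_glb_lt; [lra|]; apply Rdiv_lt_0_compat; lra).
  assert (He1 : e <= 1) by apply Rmin_l.
  assert (He2 : e <= eps / (2*K)) by apply Rmin_r.
  destruct (Hf a b Ha Hb e He0) as [d1 [Hd1 H1]].
  destruct (Hg a b Ha Hb e He0) as [d2 [Hd2 H2]].
  exists (Rmin d1 d2); split; [apply Rmin_glb_lt; auto|].
  intros a' b' Ha' Hb' Hda Hdb.
  assert (Rmin d1 d2 <= d1) by apply Rmin_l. assert (Rmin d1 d2 <= d2) by apply Rmin_r.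
  eapply Rle_lt_trans; [apply Rabs_mult_sub_le; [exact He0|exact He1|apply H1|apply H2]; auto; lra|].
  fold K. assert (HeK : e * K <= eps / (2*K) * K) by (apply Rmult_le_compat_r; lra).
  replace (eps / (2*K) * K) with (eps/2) in HeK by (field; lra). lra.
Qed.

Lemma cont2_of_cont_in f : (forall s, inI t0 t1 s -> cont_in t0 t1 f s) ->
  cont2 t0 t1 (fun _ b => f b).
Proof.
  intros H a b Ha Hb eps He. destruct (H b Hb eps He) as [d [Hd H1]].
  exists d; split; auto.
Qed.

Lemma cont2_swap f : cont2 t0 t1 (fun _ b => f b) -> cont2 t0 t1 (fun a _ => f a).
Proof.
  intros H a b Ha Hb eps He. destruct (H b a Hb Ha eps He) as [d [Hd H1]].
  exists d; split; auto. intros a' b' Ha' Hb' H2 H3. apply (H1 b' a'); auto.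
Qed.

Definition mcont2 (T : R -> R -> Mat) : Prop := forall i j, cont2 t0 t1 (fun a b => T a b i j).
Definition mcont1 (A : R -> Mat) : Prop := mcont2 (fun _ b => A b).

Lemma mcont2_mmul T S : mcont2 T -> mcont2 S -> mcont2 (fun a b => mmul (T a b) (S a b)).
Proof. intros HT HS i j. unfold mmul. repeat apply cont2_plus; apply cont2_mult; auto. Qed.
Lemma mcont2_add T S : mcont2 T -> mcont2 S -> mcont2 (fun a b => madd (T a b) (S a b)).
Proof. intros HT HS i j. apply cont2_plus; auto. Qed.
Lemma mcont2_opp T : mcont2 T -> mcont2 (fun a b => mopp (T a b)).
Proof. intros HT i j. apply cont2_opp; auto. Qed.
Lemma mcont2_mtr T : mcont2 T -> mcont2 (fun a b => mtr (T a b)).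
Proof. intros HT i j. apply HT. Qed.
Lemma mcont2_mscal c T : mcont2 T -> mcont2 (fun a b => mscal c (T a b)).
Proof. intros HT i j. apply cont2_mult; [apply cont2_const|apply HT]. Qed.
Lemma mcont2_spin T : mcont2 T -> mcont2 (fun a b => spin (T a b)).
Proof. intros HT. apply mcont2_mscal, mcont2_add, mcont2_opp, mcont2_mtr; auto. Qed.
Lemma mcont2_swap A : mcont1 A -> mcont2 (fun a _ => A a).
Proof. intros H i j. apply (cont2_swap (fun s => A s i j)). apply H. Qed.
Lemma mcont1_of_mderiv_in A A' : (forall s, inI t0 t1 s -> mderiv_in t0 t1 A s (A' s)) -> mcont1 A.
Proof.
  intros H i j. apply (cont2_of_cont_in (fun s => A s i j)). intros s Hs.
  eapply deriv_in_cont. apply (H s Hs).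
Qed.

Lemma C1_family_mmul T S : C1_family t0 t1 T -> C1_family t0 t1 S ->
  C1_family t0 t1 (fun a b => mmul (T a b) (S a b)).
Proof.
  intros [Dt1 [Dta1 [H1 C1]]] [Dt2 [Dta2 [H2 C2]]].
  exists (fun a b => madd (mmul (Dt1 a b) (S a b)) (mmul (T a b) (Dt2 a b))).
  exists (fun a b => madd (mmul (Dta1 a b) (S a b)) (mmul (T a b) (Dta2 a b))).
  split.
  - intros tau t Htau Ht. destruct (H1 tau t Htau Ht) as [Ha Hb].
    destruct (H2 tau t Htau Ht) as [Hc Hd]. split.
    + apply (mderiv_in_mmul t0 t1 (T tau) (S tau) t); auto.
    + apply (mderiv_in_mmul t0 t1 (fun s => T s t) (fun s => S s t) tau); auto.
  - assert (mT : mcont2 T) by (intros i j; apply C1).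
    assert (mDt1 : mcont2 Dt1) by (intros i j; apply C1).
    assert (mDta1 : mcont2 Dta1) by (intros i j; apply C1).
    assert (mS : mcont2 S) by (intros i j; apply C2).
    assert (mDt2 : mcont2 Dt2) by (intros i j; apply C2).
    assert (mDta2 : mcont2 Dta2) by (intros i j; apply C2).
    intros i j; split; [|split]; [apply mcont2_mmul|apply mcont2_add..]; try apply mcont2_mmul; auto.
Qed.

Lemma C1_family_mtr T : C1_family t0 t1 T -> C1_family t0 t1 (fun a b => mtr (T a b)).
Proof.
  intros [Dt [Dtau [H C]]].
  exists (fun a b => mtr (Dt a b)), (fun a b => mtr (Dtau a b)). split.
  - intros tau t Htau Ht. destruct (H tau t Htau Ht) as [Ha Hb]. split.
    + apply (mderiv_in_mtr t0 t1 (T tau) t); auto.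
    + apply (mderiv_in_mtr t0 t1 (fun s => T s t) tau); auto.
  - intros i j; split; [|split]; apply C.
Qed.

Lemma C1_family_of_upper A A' : (forall s, inI t0 t1 s -> mderiv_in t0 t1 A s (A' s)) ->
  mcont1 A' -> C1_family t0 t1 (fun _ b => A b).
Proof.
  intros H HC. exists (fun _ b => A' b), (fun _ _ => mzero). split.
  - intros tau t Htau Ht. split; [apply H; auto|apply (mderiv_in_const t0 t1 (A t) tau)].
  - assert (HA : mcont1 A) by (eapply mcont1_of_mderiv_in; eauto).
    intros i j; split; [apply HA|split; [apply HC|apply cont2_const]].
Qed.

Lemma C1_family_of_lower A A' : (forall s, inI t0 t1 s -> mderiv_in t0 t1 A s (A' s)) ->
  mcont1 A' -> C1_family t0 t1 (fun a _ => A a).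
Proof.
  intros H HC. exists (fun _ _ => mzero), (fun a _ => A' a). split.
  - intros tau t Htau Ht. split; [apply (mderiv_in_const t0 t1 (A tau) t)|apply H; auto].
  - assert (HA : mcont2 (fun a _ => A a)) by (apply mcont2_swap; eapply mcont1_of_mderiv_in; eauto).
    apply mcont2_swap in HC.
    intros i j; split; [apply HA|split; [apply cont2_const|apply HC]].
Qed.

End JointContinuity.

Definition clamp (t0 t1 s : R) := Rmax t0 (Rmin t1 s).

Section Clamp.
Variables t0 t1 : R.
Hypothesis Hle : t0 <= t1.

Lemma clamp_in s : inI t0 t1 (clamp t0 t1 s).
Proof. unfold clamp, inI. split; [apply Rmax_l|]. apply Rmax_lub; [lra|apply Rmin_l]. Qed.

Lemma clamp_id s : inI t0 t1 s -> clamp t0 t1 s = s.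
Proof. intros [H1 H2]. unfold clamp. rewrite Rmin_right by lra. rewrite Rmax_right; lra. Qed.

Lemma clamp_lipschitz s s' : Rabs (clamp t0 t1 s' - clamp t0 t1 s) <= Rabs (s' - s).
Proof.
  unfold clamp, Rmax, Rmin. repeat destruct Rle_dec; unfold Rabs; repeat destruct Rcase_abs; lra.
Qed.

Lemma continuity_pt_clamp f : (forall s, inI t0 t1 s -> cont_in t0 t1 f s) ->
  forall x, continuity_pt (fun s => f (clamp t0 t1 s)) x.
Proof.
  intros H x eps Heps. destruct (H (clamp t0 t1 x) (clamp_in x) eps Heps) as [d [Hd Hc]].
  exists d; split; auto. intros y [_ Hy]. simpl in *. unfold Rdist in *.
  apply Hc; [apply clamp_in|]. eapply Rle_lt_trans; [apply clamp_lipschitz|auto].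
Qed.

Lemma derivable_pt_lim_clamp f x l : t0 < x < t1 -> deriv_in t0 t1 f x l ->
  derivable_pt_lim (fun s => f (clamp t0 t1 s)) x l.
Proof.
  intros Hx H eps Heps. destruct (H eps Heps) as [a [Ha Hb]].
  set (d := Rmin a (Rmin (x - t0) (t1 - x))).
  assert (Hd : 0 < d) by (apply Rmin_glb_lt; [lra|apply Rmin_glb_lt; lra]).
  assert (d <= a) by apply Rmin_l.
  assert (d <= x - t0) by (eapply Rle_trans; [apply Rmin_r|apply Rmin_l]).
  assert (d <= t1 - x) by (eapply Rle_trans; [apply Rmin_r|apply Rmin_r]).
  exists (mkposreal _ Hd). intros h Hh Hhd. simpl in Hhd.
  assert (Habs : - Rabs h <= h <= Rabs h) by (unfold Rabs; destruct Rcase_abs; lra).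
  rewrite (clamp_id (x+h)), (clamp_id x) by (unfold inI; lra).
  specialize (Hb (x + h)). simpl in Hb. unfold Rdist in Hb.
  replace (x + h - x) with h in Hb by ring. apply Hb. split.
  - split; [unfold inI; lra|]. intro E; apply Hh; lra.
  - lra.
Qed.

End Clamp.

(** * Linear equations [X' = K X]: uniqueness *)

Lemma deriv_in_nonpos_antitone t0 t1 f f' p q :
  (forall s, inI t0 t1 s -> deriv_in t0 t1 f s (f' s)) ->
  (forall s, inI t0 t1 s -> f' s <= 0) -> inI t0 t1 p -> inI t0 t1 q -> p <= q -> f q <= f p.
Proof.
  intros Hd Hn Hp Hq Hpq. destruct (Req_dec p q) as [->|Hne]; [lra|].
  unfold inI in *.
  destruct (MVT_gen (fun s => f (clamp t0 t1 s)) p q f') as [c [Hc Heq]];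
    rewrite ?Rmin_left, ?Rmax_right in * by lra.
  - intros x Hx. apply is_derive_Reals, derivable_pt_lim_clamp; [lra|apply Hd; lra].
  - intros x Hx. apply continuity_pt_clamp; [lra|]. intros s Hs. eapply deriv_in_cont; apply Hd; auto.
  - rewrite !clamp_id in Heq by (unfold inI; lra).
    assert (f' c <= 0) by (apply Hn; unfold inI; lra).
    assert (f' c * (q - p) <= 0) by (apply Rmult_le_0_r; lra). lra.
Qed.

(* Gronwall: [m e^{-c(s-b)}] is nonincreasing after [b] and [- m e^{c(s-b)}] before it. *)
Lemma gronwall_zero t0 t1 m m' c b :
  (forall s, inI t0 t1 s -> deriv_in t0 t1 m s (m' s)) ->
  (forall s, inI t0 t1 s -> - (c * m s) <= m' s <= c * m s) ->
  (forall s, 0 <= m s) -> inI t0 t1 b -> m b = 0 -> forall s, inI t0 t1 s -> m s = 0.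
Proof.
  intros Hd Hb Hpos Hbin Hmb s Hs.
  assert (Hexp : forall k u, deriv_in t0 t1 (fun u => exp (k * (u - b))) u (k * exp (k * (u - b)))).
  { intros k u. apply deriv_in_of_derivable_pt_lim, is_derive_Reals.
    auto_derive; auto. unfold Rminus; ring. }
  pose proof (Hpos s).
  destruct (Rle_dec b s).
  - set (k := - c).
    assert (Hh : m s * exp (k * (s - b)) <= m b * exp (k * (b - b))).
    { apply (deriv_in_nonpos_antitone t0 t1 (fun u => m u * exp (k * (u - b)))
               (fun u => m' u * exp (k * (u - b)) + m u * (k * exp (k * (u - b))))); auto.
      - intros u Hu. apply (deriv_in_mult t0 t1 m (fun u => exp (k * (u - b)))); auto.
      - intros u Hu. specialize (Hb u Hu). pose proof (exp_pos (k * (u - b))). cbv beta.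
        replace (_ + _) with ((m' u - c * m u) * exp (k * (u - b))) by (unfold k; ring).
        apply Rmult_le_0_r; lra. }
    rewrite Hmb in Hh. pose proof (exp_pos (k * (s - b))). nra.
  - assert (Hh : - (m b * exp (c * (b - b))) <= - (m s * exp (c * (s - b)))).
    { apply (deriv_in_nonpos_antitone t0 t1 (fun u => - (m u * exp (c * (u - b))))
               (fun u => - (m' u * exp (c * (u - b)) + m u * (c * exp (c * (u - b)))))); auto; try lra.
      - intros u Hu. apply deriv_in_opp, (deriv_in_mult t0 t1 m (fun u => exp (c * (u - b)))); auto.
      - intros u Hu. specialize (Hb u Hu). pose proof (exp_pos (c * (u - b))). cbv beta.
        replace (- _) with (- ((m' u + c * m u) * exp (c * (u - b)))) by ring.
        assert (0 <= (m' u + c * m u) * exp (c * (u - b))) by (apply Rmult_le_pos; lra). lra. }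
    rewrite Hmb in Hh. pose proof (exp_pos (c * (s - b))). nra.
Qed.

Definition frob2 (A : Mat) : R :=
  A i0 i0 * A i0 i0 + A i0 i1 * A i0 i1 + A i0 i2 * A i0 i2 +
  A i1 i0 * A i1 i0 + A i1 i1 * A i1 i1 + A i1 i2 * A i1 i2 +
  A i2 i0 * A i2 i0 + A i2 i1 * A i2 i1 + A i2 i2 * A i2 i2.

Definition frob2_diff (A A' : Mat) : R :=
  2 * (A i0 i0 * A' i0 i0 + A i0 i1 * A' i0 i1 + A i0 i2 * A' i0 i2 +
  A i1 i0 * A' i1 i0 + A i1 i1 * A' i1 i1 + A i1 i2 * A' i1 i2 +
  A i2 i0 * A' i2 i0 + A i2 i1 * A' i2 i1 + A i2 i2 * A' i2 i2).

Lemma frob2_nonneg A : 0 <= frob2 A.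
Proof. unfold frob2. repeat apply Rplus_le_le_0_compat; apply Rle_0_sqr. Qed.

Lemma frob2_eq_0 A : frob2 A = 0 -> A = mzero.
Proof.
  intros H. unfold frob2 in H.
  pose proof (Rle_0_sqr (A i0 i0)); pose proof (Rle_0_sqr (A i0 i1)); pose proof (Rle_0_sqr (A i0 i2));
  pose proof (Rle_0_sqr (A i1 i0)); pose proof (Rle_0_sqr (A i1 i1)); pose proof (Rle_0_sqr (A i1 i2));
  pose proof (Rle_0_sqr (A i2 i0)); pose proof (Rle_0_sqr (A i2 i1)); pose proof (Rle_0_sqr (A i2 i2)).
  unfold Rsqr in *. apply mat_ext; intros [] []; unfold mzero; nra.
Qed.

Lemma deriv_in_frob2 t0 t1 X t X' : mderiv_in t0 t1 X t X' ->
  deriv_in t0 t1 (fun s => frob2 (X s)) t (frob2_diff (X t) X').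
Proof.
  intros H. pose proof (fun i j => deriv_in_mult _ _ _ _ _ _ _ (H i j) (H i j)) as Hm.
  pose proof (deriv_in_plus _ _ _ _ _ _ _ (deriv_in_plus _ _ _ _ _ _ _
    (deriv_in_plus _ _ _ _ _ _ _ (deriv_in_plus _ _ _ _ _ _ _
    (deriv_in_plus _ _ _ _ _ _ _ (deriv_in_plus _ _ _ _ _ _ _
    (deriv_in_plus _ _ _ _ _ _ _ (deriv_in_plus _ _ _ _ _ _ _ (Hm i0 i0) (Hm i0 i1)) (Hm i0 i2))
    (Hm i1 i0)) (Hm i1 i1)) (Hm i1 i2)) (Hm i2 i0)) (Hm i2 i1)) (Hm i2 i2)) as H'.
  eapply deriv_in_eq; [|exact H']. unfold frob2_diff; simpl; ring.
Qed.

Definition sum3 (f : I3 -> R) : R := f i0 + f i1 + f i2.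

Lemma le_sum3 f k : (forall i, 0 <= f i) -> f k <= sum3 f.
Proof.
  intros H. unfold sum3. pose proof (H i0); pose proof (H i1); pose proof (H i2). destruct k; lra.
Qed.

Lemma sum3_le f g : (forall i, f i <= g i) -> sum3 f <= sum3 g.
Proof. intros H. unfold sum3. pose proof (H i0); pose proof (H i1); pose proof (H i2). lra. Qed.

Lemma Rabs_le_two_mul_bound C k x y : Rabs k <= C ->
  - (C * (x*x + y*y)) <= 2 * x * k * y <= C * (x*x + y*y).
Proof.
  intros Hk. assert (Hk2 : - C <= k <= C) by (unfold Rabs in Hk; destruct Rcase_abs; lra).
  pose proof (Rle_0_sqr (x - y)). pose proof (Rle_0_sqr (x + y)). unfold Rsqr in *.
  assert (0 <= (C - k) * ((x + y) * (x + y))) by (apply Rmult_le_pos; lra).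
  assert (0 <= (C + k) * ((x - y) * (x - y))) by (apply Rmult_le_pos; lra).
  assert (0 <= (C - k) * ((x - y) * (x - y))) by (apply Rmult_le_pos; lra).
  assert (0 <= (C + k) * ((x + y) * (x + y))) by (apply Rmult_le_pos; lra).
  split; nra.
Qed.

Lemma frob2_diff_mmul_bound K C A : (forall i j, Rabs (K i j) <= C) ->
  - (6 * C * frob2 A) <= frob2_diff A (mmul K A) <= 6 * C * frob2 A.
Proof.
  intros HK.
  assert (E : frob2_diff A (mmul K A) =
    sum3 (fun i => sum3 (fun k => sum3 (fun j => 2 * A i j * K i k * A k j))))
    by (unfold frob2_diff, mmul, sum3; ring).
  assert (E' : 6 * C * frob2 A =
    sum3 (fun i => sum3 (fun k => sum3 (fun j => C * (A i j * A i j + A k j * A k j)))))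
    by (unfold frob2, sum3; ring).
  assert (E'' : - (6 * C * frob2 A) =
    sum3 (fun i => sum3 (fun k => sum3 (fun j => - (C * (A i j * A i j + A k j * A k j))))))
    by (unfold frob2, sum3; ring).
  rewrite E, E'', E'. split; do 3 (apply sum3_le; intro);
    apply (Rabs_le_two_mul_bound C (K _ _)), HK.
Qed.

Section LinearODEUniqueness.
Variables t0 t1 : R.

Lemma linear_ode_zero K C X b :
  (forall s, inI t0 t1 s -> forall i j, Rabs (K s i j) <= C) ->
  (forall s, inI t0 t1 s -> mderiv_in t0 t1 X s (mmul (K s) (X s))) ->
  inI t0 t1 b -> X b = mzero -> forall s, inI t0 t1 s -> X s = mzero.
Proof.
  intros HK HX Hb H0 s Hs. apply frob2_eq_0.
  apply (gronwall_zero t0 t1 (fun s => frob2 (X s)) (fun s => frob2_diff (X s) (mmul (K s) (X s)))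
           (6 * C) b); auto.
  - intros u Hu. apply deriv_in_frob2, HX, Hu.
  - intros u Hu. apply frob2_diff_mmul_bound, HK, Hu.
  - intros u. apply frob2_nonneg.
  - rewrite H0. unfold frob2, mzero. ring.
Qed.

Lemma mderiv_in_zero_const X b : (forall s, inI t0 t1 s -> mderiv_in t0 t1 X s mzero) ->
  inI t0 t1 b -> forall s, inI t0 t1 s -> X s = X b.
Proof.
  intros H Hb s Hs. apply madd_opp_eq_0.
  apply (linear_ode_zero (fun _ => mzero) 0 (fun u => madd (X u) (mopp (X b))) b); auto.
  - intros; unfold mzero; rewrite Rabs_R0; lra.
  - intros u Hu. rewrite mmul_0_l.
    eapply mderiv_in_eq; [|apply mderiv_in_add; [apply H; auto|apply mderiv_in_const]].
    apply madd_0_r.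
  - apply madd_opp_r.
Qed.

End LinearODEUniqueness.

(** * Linear equations [X' = K X]: existence by Picard iteration *)

Lemma continuous_Rplus_fun (f g : R -> R) s :
  continuous f s -> continuous g s -> continuous (fun u => f u + g u) s.
Proof.
  intros Hf Hg. apply continuity_pt_filterlim, continuity_pt_plus; apply continuity_pt_filterlim; auto.
Qed.
Lemma continuous_Rmult_fun (f g : R -> R) s :
  continuous f s -> continuous g s -> continuous (fun u => f u * g u) s.
Proof.
  intros Hf Hg. apply continuity_pt_filterlim, continuity_pt_mult; apply continuity_pt_filterlim; auto.
Qed.
Lemma continuous_Ropp_fun (f : R -> R) s : continuous f s -> continuous (fun u => - f u) s.
Proof. intros Hf. apply continuity_pt_filterlim, continuity_pt_opp, continuity_pt_filterlim; auto. Qed.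

Lemma ex_RInt_continuous_R (f : R -> R) a b : (forall s, continuous f s) -> ex_RInt f a b.
Proof. intros Hf. apply (@ex_RInt_continuous R_CompleteNormedModule); auto. Qed.

Lemma RInt_pow_right q a n t : RInt (fun s => q * (s - a)^n) a t = q * (t - a)^(S n) / INR (S n).
Proof.
  assert (HS : INR (S n) <> 0) by (apply not_0_INR; lia).
  apply (@is_RInt_unique R_CompleteNormedModule).
  replace (q * (t - a)^(S n) / INR (S n))
    with (minus (q * (t - a)^(S n) / INR (S n)) (q * (a - a)^(S n) / INR (S n)))
    by (unfold minus, plus, opp; simpl; rewrite Rminus_diag; field; auto).
  apply (@is_RInt_derive R_CompleteNormedModule (fun s => q * (s - a)^(S n) / INR (S n))).
  - intros y _. auto_derive; auto.
    change (match n with 0%nat => 1 | S _ => INR n + 1 end) with (INR (S n)).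
    unfold Rminus. field; auto.
  - intros y _. apply (@ex_derive_continuous R_AbsRing R_NormedModule). auto_derive; auto.
Qed.

Lemma RInt_pow_left q a n t : RInt (fun s => q * (a - s)^n) t a = q * (a - t)^(S n) / INR (S n).
Proof.
  assert (HS : INR (S n) <> 0) by (apply not_0_INR; lia).
  apply (@is_RInt_unique R_CompleteNormedModule).
  replace (q * (a - t)^(S n) / INR (S n))
    with (minus (- (q * (a - a)^(S n) / INR (S n))) (- (q * (a - t)^(S n) / INR (S n))))
    by (unfold minus, plus, opp; simpl; rewrite Rminus_diag; field; auto).
  apply (@is_RInt_derive R_CompleteNormedModule (fun s => - (q * (a - s)^(S n) / INR (S n)))).
  - intros y _. auto_derive; auto.
    change (match n with 0%nat => 1 | S _ => INR n + 1 end) with (INR (S n)).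
    unfold Rminus. field; auto.
  - intros y _. apply (@ex_derive_continuous R_AbsRing R_NormedModule). auto_derive; auto.
Qed.

Lemma RInt_abs_pow_bound (f : R -> R) a q n t : (forall s, continuous f s) ->
  (forall s, Rabs (f s) <= q * Rabs (s - a) ^ n) ->
  Rabs (RInt f a t) <= q * Rabs (t - a) ^ (S n) / INR (S n).
Proof.
  intros Hc Hb.
  assert (exf : forall u v, ex_RInt f u v) by (intros; apply ex_RInt_continuous_R; auto).
  assert (exa : forall u v, ex_RInt (fun s => Rabs (f s)) u v)
    by (intros; apply ex_RInt_continuous_R; intros; apply continuous_Rabs_comp; auto).
  assert (expoly : forall c u v, ex_RInt (fun s => q * (c * (s - a))^n) u v).
  { intros; apply ex_RInt_continuous_R; intros.
    apply (@ex_derive_continuous R_AbsRing R_NormedModule). auto_derive; auto. }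
  destruct (Rle_dec a t).
  - rewrite (Rabs_right (t - a)), <- RInt_pow_right by lra.
    eapply Rle_trans; [apply abs_RInt_le; auto|].
    apply RInt_le; auto.
    + replace (fun s => q * (s - a)^n) with (fun s => q * (1 * (s - a))^n)
        by (apply functional_extensionality; intros; rewrite Rmult_1_l; auto). apply expoly.
    + intros x Hx. rewrite <- (Rabs_right (x - a)) by lra. apply Hb.
  - rewrite (Rabs_left (t - a)) by lra. replace (- (t - a)) with (a - t) by ring.
    rewrite <- RInt_pow_left, <- opp_RInt_swap, Rabs_Ropp by auto.
    eapply Rle_trans; [apply abs_RInt_le; auto; lra|].
    apply RInt_le; auto; [lra| |].
    + replace (fun s => q * (a - s)^n) with (fun s => q * (-1 * (s - a))^n)
        by (apply functional_extensionality; intros; f_equal; f_equal; ring). apply expoly.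
    + intros x Hx. replace (a - x) with (Rabs (x - a)) by (rewrite Rabs_left; lra). apply Hb.
Qed.

Definition mcont (K : R -> Mat) : Prop := forall s i j, continuous (fun u => K u i j) s.

Lemma mcont_mmul A B : mcont A -> mcont B -> mcont (fun u => mmul (A u) (B u)).
Proof.
  intros HA HB s i j. unfold mmul.
  repeat apply continuous_Rplus_fun; apply continuous_Rmult_fun; auto.
Qed.

Fixpoint picard (K : R -> Mat) (a : R) (n : nat) : R -> Mat :=
  match n with
  | O => fun _ => mI
  | S m => fun t i j => RInt (fun s => mmul (K s) (picard K a m s) i j) a t
  end.

Section Picard.
Variables (K : R -> Mat) (a C : R).
Hypothesis HKc : mcont K.
Hypothesis HKb : forall s i j, Rabs (K s i j) <= C.

Lemma picard_is_derive n : mcont (picard K a n) ->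
  forall t i j, is_derive (fun u => picard K a (S n) u i j) t (mmul (K t) (picard K a n t) i j).
Proof.
  intros Hc t i j.
  apply (@is_derive_RInt R_NormedModule (fun u => mmul (K u) (picard K a n u) i j)
           (fun b => RInt (fun s => mmul (K s) (picard K a n s) i j) a b) a t).
  - apply filter_forall. intros b. apply (@RInt_correct R_CompleteNormedModule).
    apply ex_RInt_continuous_R. intros; apply mcont_mmul; auto.
  - apply mcont_mmul; auto.
Qed.

Lemma picard_cont n : mcont (picard K a n).
Proof.
  induction n as [|n IH]; intros s i j.
  - apply continuous_const.
  - apply (@ex_derive_continuous R_AbsRing R_NormedModule).
    eexists; apply picard_is_derive, IH.
Qed.

Lemma picard_bound n t i j :
  Rabs (picard K a n t i j) <= / INR (Factorial.fact n) * (3 * C * Rabs (t - a)) ^ n.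
Proof.
  revert t i j. induction n as [|n IH]; intros t i j.
  - simpl. unfold mI. rewrite Rinv_1, Rmult_1_l.
    destruct (I3_eqb i j); rewrite ?Rabs_R1, ?Rabs_R0; lra.
  - set (q := 3 * C * / INR (Factorial.fact n) * (3 * C) ^ n). simpl picard.
    eapply Rle_trans; [apply (RInt_abs_pow_bound _ a q n t)|].
    + intros; apply mcont_mmul; [apply HKc|apply picard_cont].
    + intros s. eapply Rle_trans; [apply mmul_entry_bound; [intros l; apply HKb|intros l; apply IH]|].
      unfold q. rewrite Rpow_mult_distr. right; ring.
    + unfold q. rewrite fact_simpl, mult_INR, !Rpow_mult_distr.
      simpl pow. right. field. split; apply not_0_INR; [apply Factorial.fact_neq_0|lia].
Qed.

End Picard.

Lemma exp_series_cv x :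
  Un_cv (fun N => sum_f_R0 (fun k => / INR (Factorial.fact k) * x^k) N) (exp x).
Proof. unfold exp. destruct (exist_exp x) as [l Hl]. exact Hl. Qed.

Lemma series_cv_of_abs_le (u B : nat -> R) lB : (forall n, Rabs (u n) <= B n) ->
  Un_cv (fun N => sum_f_R0 B N) lB -> exists l, Un_cv (fun N => sum_f_R0 u N) l.
Proof.
  intros Hb Hc.
  assert (X : {l | Un_cv (fun N => sum_f_R0 B N) l}) by (exists lB; exact Hc).
  destruct (Rseries_CV_comp (fun n => (u n + Rabs (u n)) / 2) B) as [l1 H1]; auto.
  { intros n. specialize (Hb n). unfold Rabs in *; destruct Rcase_abs; split; lra. }
  destruct (Rseries_CV_comp (fun n => (Rabs (u n) - u n) / 2) B) as [l2 H2]; auto.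
  { intros n. specialize (Hb n). unfold Rabs in *; destruct Rcase_abs; split; lra. }
  exists (l1 - l2). eapply Un_cv_ext; [|apply (CV_minus _ _ _ _ H1 H2)].
  intros n; simpl. rewrite <- minus_sum. apply sum_eq; intros; field.
Qed.

Lemma mmul_entry_approx K X Y C e i j : (forall l, Rabs (K i l) <= C) ->
  (forall l, Rabs (X l j - Y l j) <= e) -> Rabs (mmul K X i j - mmul K Y i j) <= 3 * C * e.
Proof.
  intros HK HXY.
  replace (mmul K X i j - mmul K Y i j) with (mmul K (madd X (mopp Y)) i j)
    by (unfold mmul, madd, mopp; ring).
  apply mmul_entry_bound; auto.
Qed.

Section PicardSeries.
Variables (K : R -> Mat) (a C : R).
Hypothesis HKc : mcont K.
Hypothesis HKb : forall s i j, Rabs (K s i j) <= C.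

Let P := picard K a.
Let sumP n y i j := sum_f_R0 (fun k => P k y i j) n.
Let B rho k := / INR (Factorial.fact k) * (3 * C * rho) ^ k.

Lemma picard_series_cv t i j : exists l, Un_cv (fun n => sumP n t i j) l.
Proof.
  apply (series_cv_of_abs_le _ (B (Rabs (t - a))) (exp (3 * C * Rabs (t - a)))).
  - intros n. apply picard_bound; auto.
  - apply exp_series_cv.
Qed.

Let r1 := mkposreal 1 Rlt_0_1.

(* Weierstrass M-test on the ball of radius 1 around [t]. *)
Lemma picard_series_cvu Phi : (forall t i j, Un_cv (fun n => sumP n t i j) (Phi t i j)) ->
  forall t i j, CVU (fun n y => sumP n y i j) (fun y => Phi y i j) t r1.
Proof.
  intros HPhi t i j eps He.
  set (rho := Rabs (t - a) + 1).
  destruct (exp_series_cv (3 * C * rho) eps He) as [N HN].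
  exists N. intros n y Hn Hy.
  eapply Rle_lt_trans;
    [apply (sum_maj1 (fun k y => P k y i j) (B rho) y (Phi y i j) (exp (3 * C * rho)) n)|].
  - apply HPhi.
  - apply exp_series_cv.
  - intros k. eapply Rle_trans; [apply picard_bound; auto|]. unfold B.
    apply Rmult_le_compat_l; [left; apply Rinv_0_lt_compat, lt_0_INR, Factorial.lt_O_fact|].
    assert (HC : 0 <= C) by (specialize (HKb 0 i0 i0); pose proof (Rabs_pos (K 0 i0 i0)); lra).
    apply pow_incr. split; [apply Rmult_le_pos; [lra|apply Rabs_pos]|].
    apply Rmult_le_compat_l; [lra|]. unfold rho. unfold Boule in Hy. simpl in Hy.
    replace (y - a) with ((y - t) + (t - a)) by ring.
    eapply Rle_trans; [apply Rabs_triang|]. lra.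
  - specialize (HN n Hn). unfold Rdist in HN. unfold B.
    unfold Rabs in HN; destruct Rcase_abs; lra.
Qed.

Lemma picard_partial_sum_derive n y i j :
  derivable_pt_lim (fun y => sumP (S n) y i j) y (mmul (K y) (fun i j => sumP n y i j) i j).
Proof.
  induction n as [|n IH].
  - replace (mmul (K y) (fun i j => sumP 0 y i j) i j) with (0 + mmul (K y) (P O y) i j)
      by (unfold mmul, sumP; simpl; ring).
    apply (derivable_pt_lim_plus (fun y => P O y i j) (fun y => P 1%nat y i j)).
    + apply (derivable_pt_lim_const (mI i j)).
    + apply is_derive_Reals, picard_is_derive, picard_cont; auto.
  - replace (mmul (K y) (fun i j => sumP (S n) y i j) i j)
      with (mmul (K y) (fun i j => sumP n y i j) i j + mmul (K y) (P (S n) y) i j)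
      by (unfold mmul, sumP; simpl; ring).
    apply (derivable_pt_lim_plus (fun y => sumP (S n) y i j) (fun y => P (S (S n)) y i j)); auto.
    apply is_derive_Reals, picard_is_derive, picard_cont; auto.
Qed.

Lemma linear_ode_exists :
  exists Phi : R -> Mat, Phi a = mI /\
    forall t i j, derivable_pt_lim (fun s => Phi s i j) t (mmul (K t) (Phi t) i j).
Proof.
  pose proof picard_series_cv as PW.
  set (Phi := fun t i j => proj1_sig (constructive_indefinite_description _ (PW t i j))).
  assert (HPhi : forall t i j, Un_cv (fun n => sumP n t i j) (Phi t i j)).
  { intros t i j. unfold Phi. destruct (constructive_indefinite_description _ (PW t i j)); auto. }
  exists Phi. split.
  - apply mat_ext; intros i j. eapply UL_sequence; [apply HPhi|].
    intros eps He; exists O; intros n _. replace (sumP n a i j) with (mI i j).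
    + unfold Rdist; rewrite Rminus_diag, Rabs_R0; lra.
    + induction n as [|n IH]; [reflexivity|].
      change (mI i j = sumP n a i j + P (S n) a i j). rewrite <- IH.
      unfold P; simpl. rewrite RInt_point. unfold zero; simpl. ring.
  - intros t i j.
    assert (HC : 0 <= C) by (specialize (HKb 0 i0 i0); pose proof (Rabs_pos (K 0 i0 i0)); lra).
    apply (CVU_derivable (fun n y => sumP (S n) y i j)
             (fun n y => mmul (K y) (fun i j => sumP n y i j) i j)
             (fun y => Phi y i j) (fun y => mmul (K y) (Phi y) i j) t r1).
    + intros eps He.
      set (e := eps / (3 * (C + 1))).
      assert (He' : 0 < e) by (unfold e; apply Rdiv_lt_0_compat; lra).
      destruct (picard_series_cvu Phi HPhi t i0 j e He') as [N0 H0].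
      destruct (picard_series_cvu Phi HPhi t i1 j e He') as [N1 H1].
      destruct (picard_series_cvu Phi HPhi t i2 j e He') as [N2 H2].
      exists (max N0 (max N1 N2)). intros n y Hn Hy.
      eapply Rle_lt_trans; [apply mmul_entry_approx with (e := e); [intros l; apply HKb|]|].
      * intros []; left; [apply H0|apply H1|apply H2]; auto; lia.
      * unfold e. apply (Rmult_lt_reg_r (C + 1)); [lra|].
        replace (3 * C * (eps / (3 * (C + 1))) * (C + 1)) with (C * eps) by (field; lra). nra.
    + intros y _. intros eps He. destruct (HPhi y i j eps He) as [N HN]. exists N.
      intros n Hn. apply HN. lia.
    + intros n y _. apply picard_partial_sum_derive.
    + unfold Boule. simpl. rewrite Rminus_diag, Rabs_R0. lra.
Qed.

End PicardSeries.

(** * The velocity gradient along the trajectory *)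

Lemma mcont_bounded t0 t1 K : t0 <= t1 -> mcont K ->
  exists C, forall s, inI t0 t1 s -> forall i j, Rabs (K s i j) <= C.
Proof.
  intros Hle Hc.
  set (f := fun s => sum3 (fun i => sum3 (fun j => Rabs (K s i j)))).
  destruct (continuity_ab_maj f t0 t1 Hle) as [Mx [HM _]].
  { intros c _. apply continuity_pt_filterlim. change (continuous f c). unfold f, sum3.
    repeat apply continuous_Rplus_fun; apply continuous_Rabs_comp, Hc. }
  exists (f Mx). intros s Hs i j. eapply Rle_trans; [|apply HM, Hs]. unfold f.
  eapply Rle_trans; [apply (le_sum3 (fun j => Rabs (K s i j))); intros; apply Rabs_pos|].
  apply (le_sum3 (fun i => sum3 (fun j => Rabs (K s i j)))).
  intros k; unfold sum3; repeat apply Rplus_le_le_0_compat; apply Rabs_pos.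
Qed.

(* [Lt s = L (clamp t0 t1 s)], i.e. [L] extended by constants outside [t0,t1]. *)
Lemma clamp_extension t0 t1 L : t0 <= t1 ->
  (forall s, inI t0 t1 s -> forall i j, cont_in t0 t1 (fun u => L u i j) s) ->
  exists Lt C, mcont Lt /\ (forall s i j, Rabs (Lt s i j) <= C) /\
               (forall s, inI t0 t1 s -> Lt s = L s).
Proof.
  intros Hle Hc.
  assert (Ltc : mcont (fun s => L (clamp t0 t1 s))).
  { intros s i j. apply continuity_pt_filterlim.
    exact (continuity_pt_clamp t0 t1 Hle (fun u => L u i j) (fun s Hs => Hc s Hs i j) s). }
  destruct (mcont_bounded t0 t1 _ Hle Ltc) as [C HC].
  exists (fun s => L (clamp t0 t1 s)), C. split; [exact Ltc|split].
  - intros s i j. rewrite <- (clamp_id t0 t1 (clamp t0 t1 s)) by (apply clamp_in, Hle).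
    apply HC, clamp_in, Hle.
  - intros s Hs. rewrite clamp_id by exact Hs. reflexivity.
Qed.

Lemma mcont_spin K : mcont K -> mcont (fun s => spin (K s)).
Proof.
  intros H s i j. unfold spin, mscal, madd, mopp, mtr.
  apply continuous_Rmult_fun; [apply continuous_const|].
  apply continuous_Rplus_fun; [apply H|apply continuous_Ropp_fun, H].
Qed.

Lemma mcont_opp_mtr K : mcont K -> mcont (fun s => mopp (mtr (K s))).
Proof. intros H s i j. apply continuous_Ropp_fun, H. Qed.

Lemma velocity_gradient_cont_in (U : Vec -> Prop) (v : Vec -> R -> Vec) (Jv : Vec -> R -> Mat)
  (t0 t1 : R) (x : R -> Vec)
  (Hsmooth : forall i, smooth_on U (fun y s => v y s i))
  (HJv : forall y s, U y -> forall i j,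
           derivable_pt_lim (fun h => v (vshift y j h) s i) 0 (Jv y s i j))
  (HxU : forall t, inI t0 t1 t -> U (x t))
  (Hx : forall t, inI t0 t1 t -> forall i,
          deriv_in t0 t1 (fun s => x s i) t (v (x t) t i)) :
  forall t, inI t0 t1 t -> forall i j, cont_in t0 t1 (fun s => Jv (x s) s i j) t.
Proof.
  intros t Ht i j.
  destruct (Hsmooth i) as [_ Hp].
  destruct (Hp (Some j)) as [g [Hg [Hgc _]]].
  assert (E : forall y s, U y -> Jv y s i j = g y s).
  { intros y s Hy. eapply uniqueness_limite; [apply HJv; auto|]. apply (Hg y s Hy). }
  intros eps He.
  destruct (Hgc (x t) t (HxU t Ht) eps He) as [d [Hd Hc]].
  assert (Hxc : forall k, exists dk, 0 < dk /\ forall s, inI t0 t1 s -> Rabs (s - t) < dk ->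
             Rabs (x s k - x t k) < d).
  { intros k. eapply deriv_in_cont; [apply (Hx t Ht k)|auto]. }
  destruct (Hxc i0) as [d0 [Hd0 H0]]. destruct (Hxc i1) as [d1 [Hd1 H1]].
  destruct (Hxc i2) as [d2 [Hd2 H2]].
  set (dd := Rmin d (Rmin d0 (Rmin d1 d2))).
  assert (dd <= d) by apply Rmin_l.
  assert (dd <= d0) by (eapply Rle_trans; [apply Rmin_r|apply Rmin_l]).
  assert (dd <= d1) by (eapply Rle_trans; [apply Rmin_r|eapply Rle_trans; [apply Rmin_r|apply Rmin_l]]).
  assert (dd <= d2) by (eapply Rle_trans; [apply Rmin_r|eapply Rle_trans; [apply Rmin_r|apply Rmin_r]]).
  exists dd. split; [unfold dd; repeat apply Rmin_glb_lt; auto|].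
  intros s Hs Hst. rewrite !E by auto. apply Hc; auto.
  - intros []; [apply H0|apply H1|apply H2]; auto; lra.
  - lra.
Qed.

(** * The decomposition *)

Lemma C1_family_of_linear_ode t0 t1 A K :
  (forall s, inI t0 t1 s -> mderiv_in t0 t1 A s (mmul (K s) (A s))) -> mcont1 t0 t1 K ->
  C1_family t0 t1 (fun _ b => A b) /\ C1_family t0 t1 (fun a _ => A a).
Proof.
  intros HA HK.
  assert (HA' : mcont1 t0 t1 (fun s => mmul (K s) (A s)))
    by (apply mcont2_mmul; [exact HK|eapply mcont1_of_mderiv_in, HA]).
  split; [apply (C1_family_of_upper t0 t1 A (fun s => mmul (K s) (A s)))
          |apply (C1_family_of_lower t0 t1 A (fun s => mmul (K s) (A s)))]; assumption.
Qed.

Lemma rotational_orthogonal t0 t1 O : (forall tau, inI t0 t1 tau -> O tau tau = mI) ->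
  rotational t0 t1 O -> forall tau t, inI t0 t1 tau -> inI t0 t1 t ->
  mmul (mtr (O tau t)) (O tau t) = mI.
Proof.
  intros HO0 [_ Hrot] tau t Htau Ht.
  rewrite (mderiv_in_zero_const t0 t1 (fun s => mmul (mtr (O tau s)) (O tau s)) tau); auto.
  - rewrite HO0 by auto. rewrite mtr_I, mmul_I_l. reflexivity.
  - intros s Hs. destruct (Hrot tau s Htau Hs) as [A [Ti [HA [[_ HT2] Hsk]]]].
    eapply mderiv_in_eq;
      [|apply (mderiv_in_mmul t0 t1 (fun s => mtr (O tau s)) (O tau)); [apply mderiv_in_mtr|]; exact HA].
    replace A with (mmul (mmul A Ti) (O tau s)) by (rewrite mmul_assoc, HT2, mmul_I_r; reflexivity).
    unfold skew in Hsk. rewrite mtr_mmul, Hsk. generalize (mmul A Ti). intros Sk. mat_field.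
Qed.

(* Differentiating [F = O M] gives [L = (dO O^-1) + O (dM M^-1) O^T]: a skew plus a
   symmetric matrix, so the skew part [dO O^-1] must be the spin [W] of [L]. *)
Lemma decomp_rotation_ode t0 t1 L F O M N : t0 < t1 ->
  (forall tau t, inI t0 t1 tau -> inI t0 t1 t -> dt_is t0 t1 F tau t (mmul (L t) (F tau t))) ->
  decomp t0 t1 F O M N -> O_ode t0 t1 L O.
Proof.
  intros Hlt HF [[_ [HO0 _]] [Hrot [[_ Hirr] [_ Hdec]]]].
  pose proof (rotational_orthogonal t0 t1 O HO0 Hrot) as Horth.
  split; [exact HO0|]. intros tau t Htau Ht.
  destruct Hrot as [_ Hrot].
  destruct (Hrot tau t Htau Ht) as [A [Ti [HA [[HT1 HT2] Hsk]]]].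
  destruct (Hirr tau t Htau Ht) as [B [Mi [HB [[HM1 HM2] Hsym]]]].
  assert (Horth' : mmul (O tau t) (mtr (O tau t)) = mI) by (apply mmul_eq_I_comm, Horth; auto).
  assert (ETi : Ti = mtr (O tau t)).
  { rewrite <- (mmul_I_l Ti), <- (Horth tau t Htau Ht), mmul_assoc, HT1, mmul_I_r. reflexivity. }
  assert (HdF : mmul (L t) (F tau t) = madd (mmul A (M tau t)) (mmul (O tau t) B)).
  { eapply mderiv_in_unique; [exact Hlt|exact Ht|apply HF; auto|].
    apply (mderiv_in_ext t0 t1 (fun s => mmul (O tau s) (M tau s))); auto.
    - intros s Hs. symmetry. apply Hdec; auto.
    - apply (mderiv_in_mmul t0 t1 (O tau) (M tau)); auto. }
  assert (HL : L t = madd (mmul A Ti) (mmul (mmul (O tau t) (mmul B Mi)) (mtr (O tau t)))).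
  { transitivity (mmul (mmul (mmul (L t) (F tau t)) Mi) (mtr (O tau t))).
    - destruct (Hdec tau t Htau Ht) as [-> _].
      rewrite !mmul_assoc, (mmul_inv_cancel _ _ _ HM1), Horth', mmul_I_r. reflexivity.
    - rewrite HdF, !mmul_add_l, !mmul_assoc, (mmul_inv_cancel _ _ _ HM1), ETi. reflexivity. }
  assert (Hsym' : symm (mmul (mmul (O tau t) (mmul B Mi)) (mtr (O tau t)))).
  { unfold symm in *.
    rewrite (mtr_mmul (mmul (O tau t) (mmul B Mi))), (mtr_mmul (O tau t)), Hsym, !mmul_assoc.
    reflexivity. }
  replace (mmul (spin (L t)) (O tau t)) with A; [exact HA|].
  rewrite HL, spin_add, (spin_of_skew _ Hsk), (spin_of_symm _ Hsym'), madd_0_r.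
  rewrite mmul_assoc, HT2, mmul_I_r. reflexivity.
Qed.

Set Implicit Arguments.
(* [Phi], [Psi] and [Y] solve [X' = W X], [X' = L X] and [X' = -L^T X] with [X t0 = I];
   [Psi] is the deformation gradient from [t0] and [Y = Psi^-T]. *)
Record fundamental_system (t0 t1 : R) (L Phi Psi Y : R -> Mat) (CL : R) : Prop := {
  fs_lt : t0 < t1;
  fs_Phi0 : Phi t0 = mI;
  fs_Psi0 : Psi t0 = mI;
  fs_Y0 : Y t0 = mI;
  fs_dPhi : forall s, inI t0 t1 s -> mderiv_in t0 t1 Phi s (mmul (spin (L s)) (Phi s));
  fs_dPsi : forall s, inI t0 t1 s -> mderiv_in t0 t1 Psi s (mmul (L s) (Psi s));
  fs_dY : forall s, inI t0 t1 s -> mderiv_in t0 t1 Y s (mmul (mopp (mtr (L s))) (Y s));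
  fs_Lcont : mcont1 t0 t1 L;
  fs_Lbound : forall s, inI t0 t1 s -> forall i j, Rabs (L s i j) <= CL
}.
Unset Implicit Arguments.

Definition Ofam (Phi : R -> Mat) : Fam := fun tau t => mmul (Phi t) (mtr (Phi tau)).
Definition Ffam (Psi Y : R -> Mat) : Fam := fun tau t => mmul (Psi t) (mtr (Y tau)).
Definition Mfam (Phi Psi Y : R -> Mat) : Fam := fun tau t => mmul (Ofam Phi t tau) (Ffam Psi Y tau t).
Definition Nfam (Phi Psi Y : R -> Mat) : Fam := fun tau t => mmul (Ffam Psi Y tau t) (Ofam Phi t tau).

Lemma Ofam_mtr Phi a b : mtr (Ofam Phi a b) = Ofam Phi b a.
Proof. unfold Ofam. rewrite mtr_mmul. reflexivity. Qed.

Section FundamentalSystem.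
Context {t0 t1 : R} {L Phi Psi Y : R -> Mat} {CL : R}.
Context (sys : fundamental_system t0 t1 L Phi Psi Y CL).

Let dPhi := fs_dPhi sys.
Let dPsi := fs_dPsi sys.
Let dY := fs_dY sys.

Let t0_in : inI t0 t1 t0.
Proof. pose proof (fs_lt sys). unfold inI; lra. Qed.

Lemma Phi_orth s : inI t0 t1 s -> mmul (mtr (Phi s)) (Phi s) = mI.
Proof.
  intros Hs. rewrite (mderiv_in_zero_const t0 t1 (fun s => mmul (mtr (Phi s)) (Phi s)) t0); auto.
  - rewrite (fs_Phi0 sys), mtr_I, mmul_I_l. reflexivity.
  - intros u Hu. eapply mderiv_in_eq;
      [|apply mderiv_in_mmul; [apply mderiv_in_mtr|]; apply dPhi; auto].
    mat_field.
Qed.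

Lemma Y_Psi_inv s : inI t0 t1 s -> mmul (mtr (Y s)) (Psi s) = mI.
Proof.
  intros Hs. rewrite (mderiv_in_zero_const t0 t1 (fun s => mmul (mtr (Y s)) (Psi s)) t0); auto.
  - rewrite (fs_Y0 sys), (fs_Psi0 sys), mtr_I, mmul_I_l. reflexivity.
  - intros u Hu. eapply mderiv_in_eq;
      [|apply mderiv_in_mmul; [apply mderiv_in_mtr, dY|apply dPsi]; auto].
    mat_field.
Qed.

Lemma Ofam_inv a b : inI t0 t1 a -> inI t0 t1 b -> mmul (Ofam Phi a b) (Ofam Phi b a) = mI.
Proof.
  intros Ha Hb. unfold Ofam. rewrite mmul_assoc, (mmul_inv_cancel _ _ _ (Phi_orth a Ha)).
  apply mmul_eq_I_comm, Phi_orth, Hb.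
Qed.

Lemma Ofam_orth a b : inI t0 t1 a -> inI t0 t1 b -> mmul (mtr (Ofam Phi a b)) (Ofam Phi a b) = mI.
Proof. intros Ha Hb. rewrite Ofam_mtr. apply Ofam_inv; auto. Qed.

Lemma Ofam_diag a : inI t0 t1 a -> Ofam Phi a a = mI.
Proof. intros Ha. apply mmul_eq_I_comm, Phi_orth, Ha. Qed.

Lemma Ofam_comp a s b : inI t0 t1 s -> Ofam Phi a b = mmul (Ofam Phi s b) (Ofam Phi a s).
Proof.
  intros Hs. unfold Ofam. rewrite !mmul_assoc, (mmul_inv_cancel _ _ _ (Phi_orth s Hs)). reflexivity.
Qed.

Lemma Ffam_inv a b : inI t0 t1 a -> inI t0 t1 b -> mmul (Ffam Psi Y a b) (Ffam Psi Y b a) = mI.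
Proof.
  intros Ha Hb. unfold Ffam. rewrite mmul_assoc, (mmul_inv_cancel _ _ _ (Y_Psi_inv a Ha)).
  apply mmul_eq_I_comm, Y_Psi_inv, Hb.
Qed.

Lemma Ffam_diag a : inI t0 t1 a -> Ffam Psi Y a a = mI.
Proof. intros Ha. apply mmul_eq_I_comm, Y_Psi_inv, Ha. Qed.

Lemma Mfam_Nfam_inv a b : inI t0 t1 a -> inI t0 t1 b ->
  is_inverse (Mfam Phi Psi Y a b) (Nfam Phi Psi Y b a).
Proof.
  intros Ha Hb. apply is_inverse_of_mmul_eq_I. unfold Mfam, Nfam.
  rewrite !mmul_assoc, <- (mmul_assoc (Ffam Psi Y a b)), Ffam_inv, mmul_I_l by auto.
  apply Ofam_inv; auto.
Qed.

Lemma Ofam_dt a b : inI t0 t1 b -> mderiv_in t0 t1 (Ofam Phi a) b (mmul (spin (L b)) (Ofam Phi a b)).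
Proof.
  intros Hb. eapply mderiv_in_eq;
    [|apply (mderiv_in_mmul t0 t1 Phi (fun _ => mtr (Phi a))); [apply dPhi, Hb|apply mderiv_in_const]].
  unfold Ofam; mat_field.
Qed.

Lemma Ofam_dtau a b : inI t0 t1 a ->
  mderiv_in t0 t1 (fun s => Ofam Phi s b) a (mopp (mmul (Ofam Phi a b) (spin (L a)))).
Proof.
  intros Ha. eapply mderiv_in_eq;
    [|apply (mderiv_in_mmul t0 t1 (fun _ => Phi b) (fun s => mtr (Phi s)));
      [apply mderiv_in_const|apply mderiv_in_mtr, dPhi, Ha]].
  unfold Ofam; mat_field.
Qed.

Lemma Ffam_dt a b : inI t0 t1 b -> mderiv_in t0 t1 (Ffam Psi Y a) b (mmul (L b) (Ffam Psi Y a b)).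
Proof.
  intros Hb. eapply mderiv_in_eq;
    [|apply (mderiv_in_mmul t0 t1 Psi (fun _ => mtr (Y a))); [apply dPsi, Hb|apply mderiv_in_const]].
  unfold Ffam; mat_field.
Qed.

Lemma Ffam_dtau a b : inI t0 t1 a ->
  mderiv_in t0 t1 (fun s => Ffam Psi Y s b) a (mopp (mmul (Ffam Psi Y a b) (L a))).
Proof.
  intros Ha. eapply mderiv_in_eq;
    [|apply (mderiv_in_mmul t0 t1 (fun _ => Psi b) (fun s => mtr (Y s)));
      [apply mderiv_in_const|apply mderiv_in_mtr, dY, Ha]].
  unfold Ffam; mat_field.
Qed.

(* [L - W = D] is what turns the product rule for [O_t^tau F] into the strain-rate equation. *)
Lemma Mfam_dt a b : inI t0 t1 a -> inI t0 t1 b ->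
  mderiv_in t0 t1 (Mfam Phi Psi Y a) b
    (mmul (mmul (mmul (Ofam Phi b a) (strain_rate (L b))) (Ofam Phi a b)) (Mfam Phi Psi Y a b)).
Proof.
  intros Ha Hb. unfold Mfam at 2.
  rewrite !mmul_assoc, (mmul_inv_cancel _ _ _ (Ofam_inv a b Ha Hb)).
  eapply mderiv_in_eq; [|apply (mderiv_in_mmul t0 t1 (fun s => Ofam Phi s a) (Ffam Psi Y a));
     [apply Ofam_dtau, Hb|apply Ffam_dt, Hb]].
  unfold Mfam; mat_field.
Qed.

Lemma Nfam_mtr_dtau a b : inI t0 t1 a -> inI t0 t1 b ->
  mderiv_in t0 t1 (fun s => mtr (Nfam Phi Psi Y s b)) a
    (mopp (mmul (mmul (mmul (Ofam Phi a b) (strain_rate (L a))) (Ofam Phi b a))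
                (mtr (Nfam Phi Psi Y a b)))).
Proof.
  intros Ha Hb. unfold Nfam at 2. rewrite mtr_mmul, Ofam_mtr.
  rewrite !mmul_assoc, (mmul_inv_cancel _ _ _ (Ofam_inv b a Hb Ha)).
  eapply mderiv_in_eq;
    [|apply mderiv_in_mtr, (mderiv_in_mmul t0 t1 (fun s => Ffam Psi Y s b) (Ofam Phi b));
     [apply Ffam_dtau, Ha|apply Ofam_dt, Ha]].
  unfold Nfam, Ofam; mat_field.
Qed.

Lemma Ofam_C1 : C1_family t0 t1 (Ofam Phi).
Proof.
  assert (HL : mcont1 t0 t1 (fun s => spin (L s))) by apply mcont2_spin, (fs_Lcont sys).
  destruct (C1_family_of_linear_ode t0 t1 Phi _ dPhi HL) as [Hup Hlow].
  apply (C1_family_mmul t0 t1 (fun _ b => Phi b) (fun a _ => mtr (Phi a))); auto.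
  apply (C1_family_mtr t0 t1 (fun a _ => Phi a)), Hlow.
Qed.

Lemma Ofam_swap_C1 : C1_family t0 t1 (fun a b => Ofam Phi b a).
Proof.
  assert (HL : mcont1 t0 t1 (fun s => spin (L s))) by apply mcont2_spin, (fs_Lcont sys).
  destruct (C1_family_of_linear_ode t0 t1 Phi _ dPhi HL) as [Hup Hlow].
  apply (C1_family_mmul t0 t1 (fun a _ => Phi a) (fun _ b => mtr (Phi b))); auto.
  apply (C1_family_mtr t0 t1 (fun _ b => Phi b)), Hup.
Qed.

Lemma Ffam_C1 : C1_family t0 t1 (Ffam Psi Y).
Proof.
  assert (HLY : mcont1 t0 t1 (fun s => mopp (mtr (L s))))
    by apply mcont2_opp, mcont2_mtr, (fs_Lcont sys).
  destruct (C1_family_of_linear_ode t0 t1 Psi _ dPsi (fs_Lcont sys)) as [Hup _].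
  destruct (C1_family_of_linear_ode t0 t1 Y _ dY HLY) as [_ Hlow].
  apply (C1_family_mmul t0 t1 (fun _ b => Psi b) (fun a _ => mtr (Y a))); auto.
  apply (C1_family_mtr t0 t1 (fun a _ => Y a)), Hlow.
Qed.

Lemma Mfam_C1 : C1_family t0 t1 (Mfam Phi Psi Y).
Proof. apply (C1_family_mmul t0 t1 (fun a b => Ofam Phi b a)); [apply Ofam_swap_C1|apply Ffam_C1]. Qed.

Lemma Nfam_C1 : C1_family t0 t1 (Nfam Phi Psi Y).
Proof. apply (C1_family_mmul t0 t1 (Ffam Psi Y)); [apply Ffam_C1|apply Ofam_swap_C1]. Qed.

Lemma conj_strain_rate_bound a b s : inI t0 t1 a -> inI t0 t1 b -> inI t0 t1 s -> forall i j,
  Rabs (mmul (mmul (Ofam Phi a b) (strain_rate (L s))) (Ofam Phi b a) i j) <= 9 * CL.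
Proof.
  intros Ha Hb Hs i j. replace (9 * CL) with (3 * (3 * 1 * CL) * 1) by ring.
  apply mmul_entry_bound; intros; [apply mmul_entry_bound; intros|];
    [apply orthogonal_entry_bound, Ofam_orth; auto
    |apply strain_rate_entry_bound, (fs_Lbound sys), Hs
    |apply orthogonal_entry_bound, Ofam_orth; auto].
Qed.

Lemma O_ode_unique O' : O_ode t0 t1 L O' -> fam_eq t0 t1 O' (Ofam Phi).
Proof.
  intros [H0 Hd] tau t Htau Ht. apply madd_opp_eq_0.
  apply (linear_ode_zero t0 t1 (fun s => spin (L s)) CL
           (fun s => madd (O' tau s) (mopp (Ofam Phi tau s))) tau); auto.
  - intros s Hs. apply spin_entry_bound, (fs_Lbound sys), Hs.
  - intros s Hs. eapply mderiv_in_eq;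
      [|apply mderiv_in_add; [apply Hd; auto|apply mderiv_in_opp, Ofam_dt, Hs]].
    mat_field.
  - rewrite H0, Ofam_diag by auto. apply madd_opp_r.
Qed.

Lemma M_ode_unique M' : M_ode t0 t1 L (Ofam Phi) M' -> fam_eq t0 t1 M' (Mfam Phi Psi Y).
Proof.
  intros [H0 Hd] tau t Htau Ht. apply madd_opp_eq_0.
  apply (linear_ode_zero t0 t1
           (fun s => mmul (mmul (Ofam Phi s tau) (strain_rate (L s))) (Ofam Phi tau s)) (9 * CL)
           (fun s => madd (M' tau s) (mopp (Mfam Phi Psi Y tau s))) tau); auto.
  - intros s Hs. apply conj_strain_rate_bound; auto.
  - intros s Hs. eapply mderiv_in_eq;
      [|apply mderiv_in_add; [apply Hd; auto|apply mderiv_in_opp, Mfam_dt; auto]].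
    rewrite mmul_add_r, mmul_opp_r. reflexivity.
  - rewrite H0 by auto. unfold Mfam. rewrite Ofam_diag, Ffam_diag, mmul_I_l by auto.
    apply madd_opp_r.
Qed.

Lemma N_ode_unique N' : N_ode t0 t1 L (Ofam Phi) N' -> fam_eq t0 t1 N' (Nfam Phi Psi Y).
Proof.
  intros [H0 Hd] tau t Htau Ht.
  change (mtr (mtr (N' tau t)) = mtr (mtr (Nfam Phi Psi Y tau t))). f_equal.
  apply madd_opp_eq_0.
  apply (linear_ode_zero t0 t1
           (fun s => mopp (mmul (mmul (Ofam Phi s t) (strain_rate (L s))) (Ofam Phi t s))) (9 * CL)
           (fun s => madd (mtr (N' s t)) (mopp (mtr (Nfam Phi Psi Y s t)))) t); auto.
  - intros s Hs i j. unfold mopp. rewrite Rabs_Ropp. apply conj_strain_rate_bound; auto.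
  - intros s Hs. eapply mderiv_in_eq;
      [|apply mderiv_in_add; [apply (Hd s t Hs Ht)|apply mderiv_in_opp, Nfam_mtr_dtau; auto]].
    mat_field.
  - rewrite H0 by auto. unfold Nfam. rewrite Ofam_diag, Ffam_diag, mmul_I_l, mtr_I by auto.
    apply madd_opp_r.
Qed.

Lemma Ofam_ode : O_ode t0 t1 L (Ofam Phi).
Proof. split; intros; [apply Ofam_diag|apply Ofam_dt]; auto. Qed.

Lemma Mfam_ode : M_ode t0 t1 L (Ofam Phi) (Mfam Phi Psi Y).
Proof.
  split; intros; [|apply Mfam_dt; auto].
  unfold Mfam. rewrite Ofam_diag, Ffam_diag, mmul_I_l by auto. reflexivity.
Qed.

Lemma Nfam_ode : N_ode t0 t1 L (Ofam Phi) (Nfam Phi Psi Y).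
Proof.
  split; intros; [|apply Nfam_mtr_dtau; auto].
  unfold Nfam. rewrite Ofam_diag, Ffam_diag, mmul_I_l, mtr_I by auto. reflexivity.
Qed.

Lemma deformation_gradient_eq (F : Fam) :
  (forall tau, inI t0 t1 tau -> F tau tau = mI) ->
  (forall tau t, inI t0 t1 tau -> inI t0 t1 t -> dt_is t0 t1 F tau t (mmul (L t) (F tau t))) ->
  forall tau t, inI t0 t1 tau -> inI t0 t1 t -> F tau t = Ffam Psi Y tau t.
Proof.
  intros HF0 HF tau t Htau Ht. apply madd_opp_eq_0.
  apply (linear_ode_zero t0 t1 L CL (fun s => madd (F tau s) (mopp (Ffam Psi Y tau s))) tau); auto.
  - apply (fs_Lbound sys).
  - intros s Hs. eapply mderiv_in_eq;
      [|apply mderiv_in_add; [apply (HF tau s Htau Hs)|apply mderiv_in_opp, Ffam_dt, Hs]].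
    mat_field.
  - rewrite HF0, Ffam_diag by auto. apply madd_opp_r.
Qed.

Section Decomposition.
Variable F : Fam.
Hypothesis HF : forall tau t, inI t0 t1 tau -> inI t0 t1 t -> F tau t = Ffam Psi Y tau t.

Lemma F_eq_O_M tau t : inI t0 t1 tau -> inI t0 t1 t ->
  F tau t = mmul (Ofam Phi tau t) (Mfam Phi Psi Y tau t).
Proof.
  intros Htau Ht. unfold Mfam. rewrite HF, mmul_inv_cancel by (auto; apply Ofam_inv; auto).
  reflexivity.
Qed.

Lemma F_eq_N_O tau t : inI t0 t1 tau -> inI t0 t1 t ->
  F tau t = mmul (Nfam Phi Psi Y tau t) (Ofam Phi tau t).
Proof. intros Htau Ht. unfold Nfam. rewrite HF, mmul_assoc, Ofam_inv, mmul_I_r by auto. reflexivity. Qed.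

Lemma decomp_exists : decomp t0 t1 F (Ofam Phi) (Mfam Phi Psi Y) (Nfam Phi Psi Y).
Proof.
  split; [|split; [|split; [|split]]].
  - split; [apply Ofam_C1|split; intros; [apply Ofam_diag|apply Ofam_comp]; auto].
  - split; [apply Ofam_C1|]. intros tau t Htau Ht.
    exists (mmul (spin (L t)) (Ofam Phi tau t)), (Ofam Phi t tau).
    split; [apply Ofam_dt; auto|split; [split; apply Ofam_inv; auto|]].
    rewrite mmul_assoc, Ofam_inv, mmul_I_r by auto. apply spin_skew.
  - split; [apply Mfam_C1|]. intros tau t Htau Ht.
    eexists; exists (Nfam Phi Psi Y t tau).
    split; [apply Mfam_dt; auto|split; [apply Mfam_Nfam_inv; auto|]].
    unfold symm. rewrite mmul_assoc, (proj1 (Mfam_Nfam_inv tau t Htau Ht)), mmul_I_r.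
    rewrite !mtr_mmul, !Ofam_mtr, strain_symm, !mmul_assoc. reflexivity.
  - split; [apply C1_family_mtr, Nfam_C1|]. intros tau t Htau Ht.
    destruct (Mfam_Nfam_inv t tau Ht Htau) as [H1 H2].
    eexists; exists (mtr (Mfam Phi Psi Y t tau)).
    split; [apply Nfam_mtr_dtau; auto|split].
    + unfold famT. split; rewrite <- mtr_mmul; [rewrite H1|rewrite H2]; apply mtr_I.
    + unfold symm, famT. rewrite mmul_opp_l, mmul_assoc, <- mtr_mmul, H1, mtr_I, mmul_I_r.
      rewrite mtr_opp, !mtr_mmul, !Ofam_mtr, strain_symm, !mmul_assoc. reflexivity.
  - intros tau t Htau Ht. split; [apply F_eq_O_M|apply F_eq_N_O]; auto.
Qed.

Lemma decomp_unique O' M' N' : decomp t0 t1 F O' M' N' ->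
  fam_eq t0 t1 O' (Ofam Phi) /\ fam_eq t0 t1 M' (Mfam Phi Psi Y) /\ fam_eq t0 t1 N' (Nfam Phi Psi Y).
Proof.
  intros Hd.
  assert (HdF : forall tau t, inI t0 t1 tau -> inI t0 t1 t ->
            dt_is t0 t1 F tau t (mmul (L t) (F tau t))).
  { intros tau t Htau Ht. rewrite HF by auto.
    apply (mderiv_in_ext t0 t1 (Ffam Psi Y tau)); auto.
    - intros s Hs. symmetry; apply HF; auto.
    - apply Ffam_dt, Ht. }
  pose proof (O_ode_unique O' (decomp_rotation_ode t0 t1 L F O' M' N' (fs_lt sys) HdF Hd)) as EO.
  destruct Hd as [[_ [HO0 _]] [Hrot [_ [_ Hdec]]]].
  pose proof (rotational_orthogonal t0 t1 O' HO0 Hrot) as Horth.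
  split; [exact EO|split]; intros tau t Htau Ht; destruct (Hdec tau t Htau Ht) as [E1 E2].
  - unfold Mfam. rewrite <- Ofam_mtr, <- (EO tau t Htau Ht), <- HF, E1 by auto.
    rewrite <- mmul_assoc, Horth, mmul_I_l by auto. reflexivity.
  - unfold Nfam. rewrite <- Ofam_mtr, <- (EO tau t Htau Ht), <- HF, E2 by auto.
    rewrite mmul_assoc, (mmul_eq_I_comm _ _ (Horth tau t Htau Ht)), mmul_I_r. reflexivity.
Qed.

Lemma Mfam_right_Cauchy_Green tau t : inI t0 t1 tau -> inI t0 t1 t ->
  mmul (mtr (Mfam Phi Psi Y tau t)) (Mfam Phi Psi Y tau t) = mmul (mtr (F tau t)) (F tau t).
Proof.
  intros Htau Ht. rewrite (F_eq_O_M tau t), mtr_mmul, !mmul_assoc by auto.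
  rewrite <- (mmul_assoc (mtr (Ofam Phi tau t))), Ofam_orth, mmul_I_l by auto. reflexivity.
Qed.

Lemma Nfam_left_Cauchy_Green tau t : inI t0 t1 tau -> inI t0 t1 t ->
  mmul (Nfam Phi Psi Y tau t) (mtr (Nfam Phi Psi Y tau t)) = mmul (F tau t) (mtr (F tau t)).
Proof.
  intros Htau Ht. rewrite (F_eq_N_O tau t), mtr_mmul, !mmul_assoc by auto.
  rewrite <- (mmul_assoc (Ofam Phi tau t)), Ofam_mtr, Ofam_inv, mmul_I_l by auto. reflexivity.
Qed.

Lemma Mfam_singular_values tau t : inI t0 t1 tau -> inI t0 t1 t ->
  same_singular_values (Mfam Phi Psi Y tau t) (F tau t).
Proof. intros Htau Ht lam. rewrite Mfam_right_Cauchy_Green; auto. Qed.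

(* [F^T F = O^T (N^T N) O] with [O] orthogonal. *)
Lemma Nfam_singular_values tau t : inI t0 t1 tau -> inI t0 t1 t ->
  same_singular_values (Nfam Phi Psi Y tau t) (F tau t).
Proof.
  intros Htau Ht lam. rewrite (F_eq_N_O tau t), mtr_mmul, !mmul_assoc by auto.
  rewrite <- (mmul_assoc (mtr (Nfam Phi Psi Y tau t))), <- mmul_assoc.
  symmetry. apply mdet_charpoly_conj. rewrite Ofam_mtr. apply Ofam_inv; auto.
Qed.

End Decomposition.

End FundamentalSystem.

Lemma fundamental_system_exists t0 t1 L : t0 < t1 ->
  (forall s, inI t0 t1 s -> forall i j, cont_in t0 t1 (fun u => L u i j) s) ->
  exists Phi Psi Y CL, fundamental_system t0 t1 L Phi Psi Y CL.
Proof.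
  intros Hlt Hc.
  destruct (clamp_extension t0 t1 L ltac:(lra) Hc) as (Lt & C & Ltc & HC & HLt).
  destruct (linear_ode_exists (fun s => spin (Lt s)) t0 C (mcont_spin _ Ltc)
              (fun s => spin_entry_bound _ _ (HC s))) as [Phi [HPhi0 HPhi]].
  destruct (linear_ode_exists Lt t0 C Ltc HC) as [Psi [HPsi0 HPsi]].
  destruct (linear_ode_exists (fun s => mopp (mtr (Lt s))) t0 C (mcont_opp_mtr _ Ltc)
              (fun s => opp_mtr_entry_bound _ _ (HC s))) as [Y [HY0 HY]].
  exists Phi, Psi, Y, C. constructor; auto;
    try (intros s Hs i j; rewrite <- (HLt s Hs); apply deriv_in_of_derivable_pt_lim; auto).
  - intros i j. apply (cont2_of_cont_in t0 t1 (fun s => L s i j)). intros s Hs. apply Hc, Hs.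
  - intros s Hs i j. rewrite <- (HLt s Hs). apply HC.
Qed.

Theorem theorem2
  (U : Vec -> Prop) (v : Vec -> R -> Vec) (Jv : Vec -> R -> Mat)
  (t0 t1 : R) (x : R -> Vec) (F : Fam)
  (HU : open_vec U)
  (Hsmooth : forall i, smooth_on U (fun y s => v y s i))
  (HJv : forall y s, U y -> forall i j,
           derivable_pt_lim (fun h => v (vshift y j h) s i) 0 (Jv y s i j))
  (Ht : t0 < t1)
  (HxU : forall t, inI t0 t1 t -> U (x t))
  (Hx : forall t, inI t0 t1 t -> forall i,
          deriv_in t0 t1 (fun s => x s i) t (v (x t) t i))
  (HF0 : forall tau, inI t0 t1 tau -> F tau tau = mI)
  (HF : forall tau t, inI t0 t1 tau -> inI t0 t1 t ->
          dt_is t0 t1 F tau t (mmul (Jv (x t) t) (F tau t))) :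
  let L := fun t => Jv (x t) t in
  exists O M N : Fam,
    (* (i) existence and uniqueness of the decomposition *)
    decomp t0 t1 F O M N /\
    (forall O' M' N', decomp t0 t1 F O' M' N' ->
       fam_eq t0 t1 O' O /\ fam_eq t0 t1 M' M /\ fam_eq t0 t1 N' N) /\
    (* (ii) *)
    (forall tau t, inI t0 t1 tau -> inI t0 t1 t ->
       nonsingular (M tau t) /\ nonsingular (N tau t) /\
       is_inverse (M t tau) (N tau t) /\
       same_singular_values (M tau t) (F tau t) /\
       same_singular_values (N tau t) (F tau t) /\
       mmul (mtr (M tau t)) (M tau t) = mmul (mtr (F tau t)) (F tau t) /\
       mmul (N tau t) (mtr (N tau t)) = mmul (F tau t) (mtr (F tau t))) /\
    (* (iii) the factors are the unique solutions of the ODEs *)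
    O_ode t0 t1 L O /\ M_ode t0 t1 L O M /\ N_ode t0 t1 L O N /\
    (forall O', O_ode t0 t1 L O' -> fam_eq t0 t1 O' O) /\
    (forall M', M_ode t0 t1 L O M' -> fam_eq t0 t1 M' M) /\
    (forall N', N_ode t0 t1 L O N' -> fam_eq t0 t1 N' N).
Proof.
  intros L.
  destruct (fundamental_system_exists t0 t1 L Ht
              (velocity_gradient_cont_in U v Jv t0 t1 x Hsmooth HJv HxU Hx))
    as (Phi & Psi & Y & CL & sys).
  pose proof (deformation_gradient_eq sys F HF0 HF) as HFr.
  exists (Ofam Phi), (Mfam Phi Psi Y), (Nfam Phi Psi Y).
  split; [exact (decomp_exists sys F HFr)|].
  split; [exact (decomp_unique sys F HFr)|].
  split.
  { intros tau t Htau Ht'. repeat split.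
    - exists (Nfam Phi Psi Y t tau). apply (Mfam_Nfam_inv sys); auto.
    - exists (Mfam Phi Psi Y t tau). apply is_inverse_sym, (Mfam_Nfam_inv sys); auto.
    - apply (Mfam_Nfam_inv sys); auto.
    - apply (Mfam_Nfam_inv sys); auto.
    - apply (Mfam_singular_values sys F HFr); auto.
    - apply (Nfam_singular_values sys F HFr); auto.
    - apply (Mfam_right_Cauchy_Green sys F HFr); auto.
    - apply (Nfam_left_Cauchy_Green sys F HFr); auto. }
  split; [exact (Ofam_ode sys)|split; [exact (Mfam_ode sys)|split; [exact (Nfam_ode sys)|]]].
  split; [exact (O_ode_unique sys)|split; [exact (M_ode_unique sys)|exact (N_ode_unique sys)]].
Qed.
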